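(* Fix integers $d\ge2$, $r\ge1$ and a constant $M>0$. There is a constant $C>0$ depending only on $d,r,M$ such that the following holds for all $n$. Let $H$ be a Hermitian operator on $(\mathbb C^d)^{\otimes n}$ that is translation-invariant ($H\mathcal T=\mathcal T H$) and whose spectrum has non-degenerate gaps. Let $A,B$ be traceless operators (not necessarily Hermitian or unitary), each $r$-local, with $\|A\|,\|B\|\le M$. Then $$\big|\mathrm{OTOC}^\infty(A,B)\big|\le C/n,\qquad \mathrm{OTOC}^\infty(A,B):=\lim_{\tau\to\infty}\frac1\tau\int_0^\tau\langle A^\dagger(t)B^\dagger A(t)B\rangle\,dt,$$ where $A(t):=e^{iHt}Ae^{-iHt}$ and $\langle X\rangle:=\operatorname{tr}X/D$ with $D=d^n$.
   Context: $\mathcal T$ is the unitary lattice translation operator on $(\mathbb C^d)^{\otimes n}$, defined on computational basis states by $\mathcal T(|x_1\rangle\otimes\cdots\otimes|x_n\rangle)=|x_n\rangle\otimes|x_1\rangle\otimes\cdots\otimes|x_{n-1}\rangle$. An operator is $r$-local if it acts nontrivially only on a set of at most $r$ consecutive sites (consecutive in the cyclic sense, sites $1,\dots,n$ arranged on a ring). The spectrum $\{E_j\}$ of a Hamiltonian has non-degenerate gaps if for all $j\neq k$, $E_j-E_k=E_{j'}-E_{k'}$ implies $j=j'$ and $k=k'$. $\|\cdot\|$ is the operator norm. *)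

From Stdlib Require Import Reals Lra Lia List Arith.
Import ListNotations.
Open Scope R_scope.

Record Cpx := mkCpx { Re : R; Im : R }.
Definition C0 : Cpx := mkCpx 0 0.
Definition C1 : Cpx := mkCpx 1 0.
Definition Cadd (z w : Cpx) : Cpx := mkCpx (Re z + Re w) (Im z + Im w).
Definition Cmul (z w : Cpx) : Cpx :=
  mkCpx (Re z * Re w - Im z * Im w) (Re z * Im w + Im z * Re w).
Definition Cconj (z : Cpx) : Cpx := mkCpx (Re z) (- Im z).
Definition Crscale (a : R) (z : Cpx) : Cpx := mkCpx (a * Re z) (a * Im z).
Definition Cofreal (a : R) : Cpx := mkCpx a 0.
Definition Cmod (z : Cpx) : R := sqrt (Re z * Re z + Im z * Im z).

Fixpoint csum (f : nat -> Cpx) (N : nat) : Cpx :=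
  match N with O => C0 | S k => Cadd (csum f k) (f k) end.
Fixpoint rsum (f : nat -> R) (N : nat) : R :=
  match N with O => 0 | S k => rsum f k + f k end.

(** * Operators on C^D, D = d^n, as matrices indexed by basis labels < D.
    Entries at labels >= D are irrelevant. *)
Definition vec := nat -> Cpx.
Definition mat := nat -> nat -> Cpx.

Definition mmul (D : nat) (A B : mat) : mat :=
  fun i j => csum (fun k => Cmul (A i k) (B k j)) D.
Definition mvmul (D : nat) (A : mat) (v : vec) : vec :=
  fun i => csum (fun k => Cmul (A i k) (v k)) D.
Definition madj (A : mat) : mat := fun i j => Cconj (A j i).
Definition mscale (z : Cpx) (A : mat) : mat := fun i j => Cmul z (A i j).
Definition mid : mat := fun i j => if Nat.eqb i j then C1 else C0.
Fixpoint mpow (D : nat) (A : mat) (k : nat) : mat :=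
  match k with O => mid | S k' => mmul D A (mpow D A k') end.

Definition ctrace (D : nat) (A : mat) : Cpx := csum (fun i => A i i) D.
Definition expect (D : nat) (A : mat) : Cpx := Crscale (/ INR D) (ctrace D A).

Definition cinner (D : nat) (u v : vec) : Cpx :=
  csum (fun i => Cmul (Cconj (u i)) (v i)) D.
Definition vnorm (D : nat) (v : vec) : R :=
  sqrt (rsum (fun i => Re (v i) * Re (v i) + Im (v i) * Im (v i)) D).

Definition hermitian (D : nat) (H : mat) : Prop :=
  forall i j, (i < D)%nat -> (j < D)%nat -> H i j = Cconj (H j i).
Definition mcommute (D : nat) (X Y : mat) : Prop :=
  forall i j, (i < D)%nat -> (j < D)%nat -> mmul D X Y i j = mmul D Y X i j.
Definition traceless (D : nat) (A : mat) : Prop := ctrace D A = C0.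
Definition opnorm_le (D : nat) (A : mat) (M : R) : Prop :=
  forall v : vec, vnorm D (mvmul D A v) <= M * vnorm D v.

(** [E] is the spectrum {E_j}_{j<D} (with multiplicity) of the Hermitian [H]:
    there is an orthonormal basis (b j)_{j<D} with H b_j = E_j b_j. *)
Definition spectrum_of (D : nat) (H : mat) (E : nat -> R) : Prop :=
  exists b : nat -> vec,
    (forall j k, (j < D)%nat -> (k < D)%nat ->
        cinner D (b j) (b k) = if Nat.eqb j k then C1 else C0) /\
    (forall j i, (j < D)%nat -> (i < D)%nat ->
        mvmul D H (b j) i = Cmul (Cofreal (E j)) (b j i)).

Definition nondeg_gaps (D : nat) (E : nat -> R) : Prop :=
  forall j k j' k', (j < D)%nat -> (k < D)%nat -> (j' < D)%nat -> (k' < D)%nat ->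
    j <> k -> E j - E k = E j' - E k' -> j = j' /\ k = k'.

Definition is_mexp (D : nat) (X E : mat) : Prop :=
  forall i j, (i < D)%nat -> (j < D)%nat ->
    Un_cv (fun N => Re (csum (fun k => Crscale (/ INR (fact k)) (mpow D X k i j)) (S N)))
          (Re (E i j)) /\
    Un_cv (fun N => Im (csum (fun k => Crscale (/ INR (fact k)) (mpow D X k i j)) (S N)))
          (Im (E i j)).

(** * Tensor-product structure of (C^d)^{(x)n}.
    Basis label x < d^n encodes |x_1> (x) ... (x) |x_n>, where the value at
    site k+1 (k = 0..n-1) is the k-th base-d digit of x. *)
Definition dig (d k x : nat) : nat := ((x / d ^ k) mod d)%nat.

(** lattice translation: T|x_1..x_n> = |x_n x_1 .. x_{n-1}>, i.e.
    <y|T|x> = 1 iff y_k = x_{k-1 mod n} for all sites k. *)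
Definition transl (d n : nat) : mat :=
  fun y x =>
    if forallb (fun k => Nat.eqb (dig d k y) (dig d ((k + n - 1) mod n) x)) (seq 0 n)
    then C1 else C0.

(** site k (0-based) lies in the cyclic window {s, s+1, ..., s+m-1} (mod n) *)
Definition in_window (n s m k : nat) : bool := Nat.ltb (((k + n - s) mod n)) m.

Definition agree_off (d n s m y x : nat) : bool :=
  forallb (fun k => orb (in_window n s m k) (Nat.eqb (dig d k y) (dig d k x))) (seq 0 n).

Definition proj_window (d n s m y : nat) : nat :=
  list_sum (map (fun k => if in_window n s m k then (dig d k y * d ^ k)%nat else 0%nat)
                (seq 0 n)).

(** A is r-local: A = a (x) Id, with a acting on a set of at most r
    cyclically consecutive sites (the window {s,...,s+m-1}, m <= r). *)
Definition r_local (d n r : nat) (A : mat) : Prop :=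
  exists (s m : nat) (a : nat -> nat -> Cpx),
    (s < n)%nat /\ (m <= r)%nat /\
    forall y x, (y < d ^ n)%nat -> (x < d ^ n)%nat ->
      A y x = if agree_off d n s m y x
              then a (proj_window d n s m y) (proj_window d n s m x) else C0.

(** * OTOC integrand <A^dag(t) B^dag A(t) B>, with A(t) = U t * A * V t,
    where U t = e^{iHt}, V t = e^{-iHt}. *)
Definition heis (D : nat) (U V : R -> mat) (A : mat) (t : R) : mat :=
  mmul D (mmul D (U t) A) (V t).
Definition otoc_integrand (D : nat) (U V : R -> mat) (A B : mat) (t : R) : Cpx :=
  let At := heis D U V A t in
  expect D (mmul D (mmul D (mmul D (madj At) (madj B)) At) B).

Definition time_avg_cv (f : R -> Cpx) (L : Cpx) : Prop :=
  exists (pre : forall tau, Riemann_integrable (fun t => Re (f t)) 0 tau)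
         (pim : forall tau, Riemann_integrable (fun t => Im (f t)) 0 tau),
    forall eps, 0 < eps -> exists T, forall tau, T < tau ->
      Rabs (RiemannInt (pre tau) / tau - Re L) < eps /\
      Rabs (RiemannInt (pim tau) / tau - Im L) < eps.

(** Let (b_a) be an orthonormal eigenbasis of H and write X_ca = <b_c|X b_a>.

    - Evolution.  e^{±iHt} are diagonal in the eigenbasis with entries
      e^{±itE_a}, so the OTOC integrand is a finite sum of terms
      w_{aecb'} e^{i ω t} with ω = E_a - E_b' + E_c - E_e.  The time average of
      e^{iωt} is 1 if ω = 0 and 0 otherwise, hence the limit L exists and is
      the sum of the resonant coefficients.
    - Resonances.  Non-degenerate gaps force ω = 0 only if (a = b', c = e)
      or (a = e, b' = c); so |L| ≤ D⁻¹ Σ_{a,e} |A_aa||A_ee||B_ea|² + (A ↔ B).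
    - Schur test.  The rows and columns of (|B_ea|²) sum to at most ‖B‖² ≤ M²,
      so each of the two sums is at most M² Σ_a |A_aa|².
    - Translation invariance.  Non-degenerate gaps make the spectrum simple,
      so the translation T is diagonal in the eigenbasis with unimodular
      eigenvalues; consequently A and its translates have the same diagonal.
      Averaging A over K = ⌊n/r⌋ translates with pairwise disjoint supports
      (orthogonal in Hilbert–Schmidt inner product since A is traceless)
      gives Σ_a |A_aa|² ≤ ‖avg‖²_HS = ‖A‖²_HS / K ≤ D M² / K.
    Altogether |L| ≤ 2 M⁴ / K ≤ 4 r M⁴ / n. *)

From Stdlib Require Import Reals Lra Lia List Arith Permutation Bool Classical FunctionalExtensionality.
From Pilot Require Import Defs.
From HB Require structures.
From mathcomp Require all_boot all_algebra Rstruct.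
From Coquelicot Require Coquelicot.
Import ListNotations.

Open Scope R_scope.

Lemma Cpx_eq (z w : Cpx) : Re z = Re w -> Im z = Im w -> z = w.
Proof. destruct z, w; simpl; intros; subst; reflexivity. Qed.

Definition Copp (z : Cpx) : Cpx := mkCpx (- Re z) (- Im z).
Definition Csub (z w : Cpx) : Cpx := Cadd z (Copp w).

Lemma Cring : ring_theory C0 C1 Cadd Cmul Csub Copp (@eq Cpx).
Proof. constructor; intros; apply Cpx_eq; simpl; ring. Qed.
Add Ring Cpx_ring : Cring.

Lemma Crscale_mul (a : R) (z : Cpx) : Crscale a z = Cmul (Cofreal a) z.
Proof. apply Cpx_eq; simpl; ring. Qed.
Lemma Cofreal_add (a b : R) : Cofreal (a + b) = Cadd (Cofreal a) (Cofreal b).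
Proof. apply Cpx_eq; simpl; ring. Qed.
Lemma Cofreal_mul (a b : R) : Cofreal (a * b) = Cmul (Cofreal a) (Cofreal b).
Proof. apply Cpx_eq; simpl; ring. Qed.
Lemma Cconj_add (z w : Cpx) : Cconj (Cadd z w) = Cadd (Cconj z) (Cconj w).
Proof. apply Cpx_eq; simpl; ring. Qed.
Lemma Cconj_mul (z w : Cpx) : Cconj (Cmul z w) = Cmul (Cconj z) (Cconj w).
Proof. apply Cpx_eq; simpl; ring. Qed.
Lemma Cconj_conj (z : Cpx) : Cconj (Cconj z) = z.
Proof. apply Cpx_eq; simpl; ring. Qed.
Lemma Cconj_0 : Cconj C0 = C0.
Proof. apply Cpx_eq; simpl; ring. Qed.

Lemma Cmul_real_cancel (r : R) (z : Cpx) : r <> 0 -> Cmul (Cofreal r) z = C0 -> z = C0.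
Proof.
  intros Hr E. apply (f_equal Re) in E as E1. apply (f_equal Im) in E as E2. simpl in *.
  apply Cpx_eq; simpl.
  - assert (r * Re z = 0) as Hz by lra. destruct (Rmult_integral _ _ Hz); [contradiction|auto].
  - assert (r * Im z = 0) as Hz by lra. destruct (Rmult_integral _ _ Hz); [contradiction|auto].
Qed.

(** Squared modulus |z|², which avoids square roots in most computations. *)
Definition Cnorm2 (z : Cpx) : R := Re z * Re z + Im z * Im z.

Lemma Cnorm2_nonneg (z : Cpx) : 0 <= Cnorm2 z.
Proof. unfold Cnorm2; nra. Qed.
Lemma Cnorm2_mul (z w : Cpx) : Cnorm2 (Cmul z w) = Cnorm2 z * Cnorm2 w.
Proof. unfold Cnorm2; simpl; ring. Qed.
Lemma Cnorm2_conj (z : Cpx) : Cnorm2 (Cconj z) = Cnorm2 z.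
Proof. unfold Cnorm2; simpl; ring. Qed.
Lemma Cmul_conj_l (z : Cpx) : Cmul (Cconj z) z = Cofreal (Cnorm2 z).
Proof. apply Cpx_eq; unfold Cnorm2; simpl; ring. Qed.

Lemma Cmod_nonneg (z : Cpx) : 0 <= Cmod z.
Proof. apply sqrt_pos. Qed.
Lemma Cmod_sqr (z : Cpx) : Cmod z * Cmod z = Cnorm2 z.
Proof. apply sqrt_sqrt, Cnorm2_nonneg. Qed.
Lemma Cmod_mul (z w : Cpx) : Cmod (Cmul z w) = Cmod z * Cmod w.
Proof.
  unfold Cmod. fold (Cnorm2 (Cmul z w)) (Cnorm2 z) (Cnorm2 w).
  rewrite Cnorm2_mul, sqrt_mult; auto using Cnorm2_nonneg.
Qed.
Lemma Cmod_conj (z : Cpx) : Cmod (Cconj z) = Cmod z.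
Proof. unfold Cmod. fold (Cnorm2 (Cconj z)) (Cnorm2 z). rewrite Cnorm2_conj; auto. Qed.
Lemma Cmod_ofreal (a : R) : Cmod (Cofreal a) = Rabs a.
Proof.
  unfold Cmod; simpl. replace (a * a + 0 * 0) with (a * a) by ring. apply sqrt_Rsqr_abs.
Qed.
Lemma Cmod_0 : Cmod C0 = 0.
Proof. unfold Cmod; simpl. replace (0*0+0*0) with 0 by ring. apply sqrt_0. Qed.

(** Triangle inequality, from Cauchy–Schwarz  Re(z w̄) ≤ |z||w|. *)
Lemma Cmod_add (z w : Cpx) : Cmod (Cadd z w) <= Cmod z + Cmod w.
Proof.
  assert (Hz := Cmod_nonneg z); assert (Hw := Cmod_nonneg w).
  assert (Hz2 := Cmod_sqr z); assert (Hw2 := Cmod_sqr w).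
  assert (Hcs : Re z * Re w + Im z * Im w <= Cmod z * Cmod w).
  { destruct (Rle_dec (Re z * Re w + Im z * Im w) 0); [nra|].
    apply Rsqr_incr_0_var; [|nra]. unfold Rsqr, Cnorm2 in *.
    assert (0 <= (Re z * Im w - Im z * Re w) * (Re z * Im w - Im z * Re w)) by apply Rle_0_sqr.
    nra. }
  apply Rsqr_incr_0_var; [|lra]. unfold Rsqr.
  rewrite Cmod_sqr. unfold Cnorm2 in *; simpl. nra.
Qed.

Lemma csum_ext (f g : nat -> Cpx) (N : nat) :
  (forall k, (k < N)%nat -> f k = g k) -> csum f N = csum g N.
Proof.
  induction N; intros H; simpl; auto.
  rewrite IHN by (intros; apply H; lia). rewrite H by lia. auto.
Qed.
Lemma rsum_ext (f g : nat -> R) (N : nat) :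
  (forall k, (k < N)%nat -> f k = g k) -> rsum f N = rsum g N.
Proof.
  induction N; intros H; simpl; auto.
  rewrite IHN by (intros; apply H; lia). rewrite H by lia. auto.
Qed.
Lemma csum_add (f g : nat -> Cpx) (N : nat) :
  csum (fun k => Cadd (f k) (g k)) N = Cadd (csum f N) (csum g N).
Proof. induction N; simpl. apply Cpx_eq; simpl; ring. rewrite IHN. ring. Qed.
Lemma rsum_add (f g : nat -> R) (N : nat) :
  rsum (fun k => f k + g k) N = rsum f N + rsum g N.
Proof. induction N; simpl. ring. rewrite IHN. ring. Qed.
Lemma csum_scal (c : Cpx) (f : nat -> Cpx) (N : nat) :
  csum (fun k => Cmul c (f k)) N = Cmul c (csum f N).
Proof. induction N; simpl. apply Cpx_eq; simpl; ring. rewrite IHN. ring. Qed.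
Lemma csum_scal_r (c : Cpx) (f : nat -> Cpx) (N : nat) :
  csum (fun k => Cmul (f k) c) N = Cmul (csum f N) c.
Proof. induction N; simpl. apply Cpx_eq; simpl; ring. rewrite IHN. ring. Qed.
Lemma rsum_scal (c : R) (f : nat -> R) (N : nat) :
  rsum (fun k => c * f k) N = c * rsum f N.
Proof. induction N; simpl. ring. rewrite IHN. ring. Qed.
Lemma csum_zero (N : nat) : csum (fun _ => C0) N = C0.
Proof. induction N; simpl; auto. rewrite IHN. ring. Qed.
Lemma rsum_zero (N : nat) : rsum (fun _ => 0) N = 0.
Proof. induction N; simpl; auto. rewrite IHN. ring. Qed.
Lemma rsum_const (c : R) (N : nat) : rsum (fun _ => c) N = INR N * c.
Proof. induction N. simpl; ring. rewrite S_INR; simpl; rewrite IHN; ring. Qed.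

Lemma csum_swap (f : nat -> nat -> Cpx) (N M : nat) :
  csum (fun i => csum (fun j => f i j) M) N = csum (fun j => csum (fun i => f i j) N) M.
Proof. induction N; simpl. symmetry; apply csum_zero. rewrite IHN, <- csum_add. auto. Qed.
Lemma rsum_swap (f : nat -> nat -> R) (N M : nat) :
  rsum (fun i => rsum (fun j => f i j) M) N = rsum (fun j => rsum (fun i => f i j) N) M.
Proof. induction N; simpl. symmetry; apply rsum_zero. rewrite IHN, <- rsum_add. auto. Qed.

Lemma csum_mul (f g : nat -> Cpx) (N M : nat) :
  Cmul (csum f N) (csum g M) = csum (fun i => csum (fun j => Cmul (f i) (g j)) M) N.
Proof.
  rewrite <- csum_scal_r. apply csum_ext; intros i _. rewrite <- csum_scal. reflexivity.
Qed.

Lemma Re_csum (f : nat -> Cpx) (N : nat) : Re (csum f N) = rsum (fun k => Re (f k)) N.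
Proof. induction N; simpl; auto. rewrite IHN; auto. Qed.
Lemma Im_csum (f : nat -> Cpx) (N : nat) : Im (csum f N) = rsum (fun k => Im (f k)) N.
Proof. induction N; simpl; auto. rewrite IHN; auto. Qed.
Lemma Cconj_csum (f : nat -> Cpx) (N : nat) :
  Cconj (csum f N) = csum (fun k => Cconj (f k)) N.
Proof. induction N; simpl. apply Cconj_0. rewrite Cconj_add, IHN; auto. Qed.
Lemma csum_ofreal (f : nat -> R) (N : nat) :
  csum (fun k => Cofreal (f k)) N = Cofreal (rsum f N).
Proof. induction N; simpl; auto. rewrite IHN, Cofreal_add; auto. Qed.

Lemma rsum_le (f g : nat -> R) (N : nat) :
  (forall k, (k < N)%nat -> f k <= g k) -> rsum f N <= rsum g N.
Proof.
  induction N; intros H; simpl. lra.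
  assert (rsum f N <= rsum g N) by (apply IHN; intros; apply H; lia).
  assert (f N <= g N) by (apply H; lia). lra.
Qed.
Lemma rsum_nonneg (f : nat -> R) (N : nat) :
  (forall k, (k < N)%nat -> 0 <= f k) -> 0 <= rsum f N.
Proof. intros H. rewrite <- (rsum_zero N). apply rsum_le. auto. Qed.
Lemma rsum_single_le (f : nat -> R) (N c : nat) :
  (c < N)%nat -> (forall k, (k < N)%nat -> 0 <= f k) -> f c <= rsum f N.
Proof.
  induction N; intros Hc H. lia. simpl.
  destruct (Nat.eq_dec c N) as [->|ne].
  - assert (0 <= rsum f N) by (apply rsum_nonneg; intros; apply H; lia). lra.
  - assert (f c <= rsum f N) by (apply IHN; [lia| intros; apply H; lia]).
    assert (0 <= f N) by (apply H; lia). lra.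
Qed.
Lemma Cnorm2_le_sum_single (f : nat -> Cpx) (N c : nat) :
  (c < N)%nat -> Cnorm2 (f c) <= rsum (fun k => Cnorm2 (f k)) N.
Proof. intros Hc. apply (rsum_single_le (fun k => Cnorm2 (f k))); auto using Cnorm2_nonneg. Qed.
Lemma Cmod_csum (f : nat -> Cpx) (N : nat) : Cmod (csum f N) <= rsum (fun k => Cmod (f k)) N.
Proof. induction N; simpl. rewrite Cmod_0; lra. eapply Rle_trans. apply Cmod_add. lra. Qed.

Definition deltaC (i j : nat) : Cpx := if Nat.eqb i j then C1 else C0.
Definition deltaR (i j : nat) : R := if Nat.eqb i j then 1 else 0.

Lemma deltaC_sym (i j : nat) : deltaC i j = deltaC j i.
Proof. unfold deltaC. rewrite Nat.eqb_sym. auto. Qed.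
Lemma deltaR_sym (i j : nat) : deltaR i j = deltaR j i.
Proof. unfold deltaR. rewrite Nat.eqb_sym. auto. Qed.
Lemma deltaR_nonneg (i j : nat) : 0 <= deltaR i j.
Proof. unfold deltaR. destruct (Nat.eqb i j); lra. Qed.
Lemma deltaR_refl (i : nat) : deltaR i i = 1.
Proof. unfold deltaR. rewrite Nat.eqb_refl. auto. Qed.

Lemma csum_delta_l (c : nat) (f : nat -> Cpx) (N : nat) :
  (c < N)%nat -> csum (fun k => Cmul (deltaC c k) (f k)) N = f c.
Proof.
  induction N; intros H. lia. simpl. unfold deltaC at 2.
  destruct (Nat.eqb_spec c N) as [->|ne].
  - rewrite (csum_ext _ (fun _ => C0)), csum_zero. ring.
    intros k Hk. unfold deltaC. destruct (Nat.eqb_spec N k). lia. ring.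
  - rewrite IHN by lia. ring.
Qed.
Lemma csum_delta_r (c : nat) (f : nat -> Cpx) (N : nat) :
  (c < N)%nat -> csum (fun k => Cmul (deltaC k c) (f k)) N = f c.
Proof.
  intros H. rewrite <- (csum_delta_l c f N H). apply csum_ext. intros k _.
  rewrite deltaC_sym. auto.
Qed.
Lemma rsum_delta_l (c : nat) (f : nat -> R) (N : nat) :
  (c < N)%nat -> rsum (fun k => deltaR c k * f k) N = f c.
Proof.
  intros H. apply (f_equal Re (x := Cofreal _) (y := Cofreal (f c))).
  rewrite <- csum_ofreal, <- (csum_delta_l c (fun k => Cofreal (f k)) N H).
  apply csum_ext. intros k _. unfold deltaR, deltaC. apply Cpx_eq; destruct (Nat.eqb c k); simpl; ring.
Qed.
Lemma rsum_delta_r (c : nat) (f : nat -> R) (N : nat) :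
  (c < N)%nat -> rsum (fun k => deltaR k c * f k) N = f c.
Proof.
  intros H. rewrite <- (rsum_delta_l c f N H). apply rsum_ext. intros k _.
  rewrite deltaR_sym. auto.
Qed.

Fixpoint lsum (l : list nat) (f : nat -> R) : R :=
  match l with [] => 0 | x :: l' => f x + lsum l' f end.

Lemma rsum_lsum (f : nat -> R) (N : nat) : rsum f N = lsum (seq 0 N) f.
Proof.
  assert (Happ : forall l1 l2, lsum (l1 ++ l2) f = lsum l1 f + lsum l2 f).
  { induction l1; intros; simpl. ring. rewrite IHl1; ring. }
  induction N. reflexivity.
  change (rsum f (S N)) with (rsum f N + f N). rewrite seq_S, Happ, IHN. simpl. ring.
Qed.

Lemma rsum_reindex (s : nat -> nat) (f : nat -> R) (N : nat) :
  (forall k, (k < N)%nat -> (s k < N)%nat) ->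
  (forall k l, (k < N)%nat -> (l < N)%nat -> s k = s l -> k = l) ->
  rsum (fun k => f (s k)) N = rsum f N.
Proof.
  intros Hr Hi.
  assert (Hmap : forall l, lsum (map s l) f = lsum l (fun k => f (s k))).
  { induction l; simpl; auto. rewrite IHl; auto. }
  assert (Hperm : forall l l', Permutation l l' -> lsum l f = lsum l' f).
  { induction 1; simpl; auto; try ring. rewrite IHPermutation; auto. congruence. }
  rewrite !rsum_lsum, <- Hmap. apply Hperm, Permutation_map_same_l.
  - apply FinFun.Injective_map_NoDup_in; [|apply seq_NoDup].
    intros x y Hx Hy. apply in_seq in Hx; apply in_seq in Hy. apply Hi; lia.
  - intros y Hy. apply in_map_iff in Hy. destruct Hy as [x [<- Hx]].
    apply in_seq in Hx. apply in_seq. specialize (Hr x). lia.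
Qed.
Lemma csum_reindex (s : nat -> nat) (f : nat -> Cpx) (N : nat) :
  (forall k, (k < N)%nat -> (s k < N)%nat) ->
  (forall k l, (k < N)%nat -> (l < N)%nat -> s k = s l -> k = l) ->
  csum (fun k => f (s k)) N = csum f N.
Proof.
  intros Hr Hi. apply Cpx_eq.
  - rewrite !Re_csum. apply (rsum_reindex s (fun k => Re (f k))); auto.
  - rewrite !Im_csum. apply (rsum_reindex s (fun k => Im (f k))); auto.
Qed.

Lemma csum_flatten (h : nat -> nat -> Cpx) (N M : nat) : M <> 0%nat ->
  csum (fun x => csum (fun y => h x y) M) N = csum (fun p => h (p / M) (p mod M))%nat (N * M).
Proof.
  intros HM.
  assert (Hsplit : forall f a b, csum f (a + b) = Cadd (csum f a) (csum (fun k => f (a + k)%nat) b)).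
  { intros f a b. induction b; simpl. rewrite Nat.add_0_r. ring.
    rewrite Nat.add_succ_r. simpl. rewrite IHb. ring. }
  induction N; simpl; auto.
  replace (M + N * M)%nat with (N * M + M)%nat by lia. rewrite Hsplit, IHN. f_equal.
  apply csum_ext. intros k Hk. replace (N * M + k)%nat with (k + N * M)%nat by lia. f_equal.
  - rewrite Nat.div_add, Nat.div_small; auto.
  - rewrite Nat.Div0.mod_add, Nat.mod_small; auto.
Qed.

(** ** Completeness of an orthonormal family of D vectors in C^D

    If the columns of Q are orthonormal (Q*Q = 1) then also QQ* = 1, i.e.
    Σ_j b_j(i) conj(b_j(l)) = δ_il.  We borrow this from MathComp's matrix
    library ([mulmx1C]), after equipping [Cpx] with a commutative ring
    structure. *)
Module CompleteBasis.
Import HB.structures.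
Import mathcomp.boot.all_boot mathcomp.algebra.all_algebra mathcomp.reals_stdlib.Rstruct.
Local Open Scope ring_scope.

Definition c2p (z : Cpx) : (Rdefinitions.R * Rdefinitions.R)%type := (Re z, Im z).
Definition p2c (p : (Rdefinitions.R * Rdefinitions.R)%type) : Cpx := mkCpx p.1 p.2.
Lemma c2pK : cancel c2p p2c. Proof. by case. Qed.
HB.instance Definition _ := Equality.copy Cpx (can_type c2pK).
HB.instance Definition _ := Choice.copy Cpx (can_type c2pK).

Lemma CaddA : associative Cadd. Proof. by move=> x y z; ring. Qed.
Lemma CaddC : commutative Cadd. Proof. by move=> x y; ring. Qed.
Lemma Cadd0 : left_id C0 Cadd. Proof. by move=> x; ring. Qed.
Lemma CaddN : left_inverse C0 Copp Cadd. Proof. by move=> x; ring. Qed.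
HB.instance Definition _ := GRing.isZmodule.Build Cpx CaddA CaddC Cadd0 CaddN.
Lemma CmulA : associative Cmul. Proof. by move=> x y z; ring. Qed.
Lemma CmulC : commutative Cmul. Proof. by move=> x y; ring. Qed.
Lemma Cmul1 : left_id C1 Cmul. Proof. by move=> x; ring. Qed.
Lemma CmulD : left_distributive Cmul Cadd. Proof. by move=> x y z; ring. Qed.
Lemma C10 : C1 != C0.
Proof. apply/eqP => H. have : Re C1 = Re C0 by rewrite H. exact: R1_neq_R0. Qed.
HB.instance Definition _ := GRing.Zmodule_isComNzRing.Build Cpx CmulA CmulC Cmul1 CmulD C10.

Lemma csum_big (f : nat -> Cpx) (N : nat) : csum f N = \sum_(i < N) f i.
Proof. elim: N => [|N IH]; first by rewrite big_ord0. by rewrite big_ord_recr /= IH. Qed.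

Lemma deltaC_ord (D : nat) (p q : 'I_D) : deltaC p q = (1%:M : 'M[Cpx]_D) p q.
Proof.
  rewrite /deltaC !mxE. case: (PeanoNat.Nat.eqb_spec p q) => [/val_inj ->|ne].
    by rewrite eqxx.
  by case: eqP => // E; case: ne; rewrite E.
Qed.

Lemma completeness (D : nat) (b : nat -> vec) :
  (forall j k, (j < D)%N -> (k < D)%N ->
     csum (fun i => Cmul (Cconj (b j i)) (b k i)) D = deltaC j k) ->
  forall i l, (i < D)%N -> (l < D)%N ->
     csum (fun j => Cmul (b j i) (Cconj (b j l))) D = deltaC i l.
Proof.
  move=> Hon i l Hi Hl.
  pose Q : 'M[Cpx]_D := \matrix_(p < D, q < D) b q p.
  pose Qa : 'M[Cpx]_D := \matrix_(p < D, q < D) Cconj (b p q).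
  have QaQ : Qa *m Q = 1%:M.
    apply/matrixP => p q. rewrite -deltaC_ord mxE -Hon //.
    by rewrite csum_big; apply: eq_bigr => k _; rewrite !mxE.
  have := congr1 (fun X : 'M[Cpx]_D => X (Ordinal Hi) (Ordinal Hl)) (mulmx1C QaQ).
  rewrite /= -deltaC_ord mxE /= => <-.
  by rewrite csum_big; apply: eq_bigr => k _; rewrite !mxE.
Qed.
End CompleteBasis.

Section Basis.
Variable D : nat.
Variable b : nat -> vec.
Hypothesis Hon : forall j k, (j < D)%nat -> (k < D)%nat ->
  cinner D (b j) (b k) = if Nat.eqb j k then C1 else C0.

Definition coef (v : vec) (c : nat) : Cpx := cinner D (b c) v.
Definition hat (X : mat) (c a : nat) : Cpx := cinner D (b c) (mvmul D X (b a)).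

Lemma basis_complete i l : (i < D)%nat -> (l < D)%nat ->
  csum (fun j => Cmul (b j i) (Cconj (b j l))) D = deltaC i l.
Proof.
  intros Hi Hl.
  apply CompleteBasis.completeness; try (apply (ssrbool.introT ssrnat.ltP); assumption).
  intros j k Hj Hk. apply Hon; apply (ssrbool.elimT ssrnat.ltP); assumption.
Qed.

Lemma bnorm a : (a < D)%nat -> rsum (fun i => Cnorm2 (b a i)) D = 1.
Proof.
  intros Ha. assert (E := Hon a a Ha Ha). rewrite Nat.eqb_refl in E.
  apply (f_equal Re) in E. unfold cinner in E. rewrite Re_csum in E. simpl in E.
  rewrite <- E. apply rsum_ext. intros; unfold Cnorm2; simpl; ring.
Qed.

Lemma expansion v i : (i < D)%nat -> v i = csum (fun c => Cmul (coef v c) (b c i)) D.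
Proof.
  intros Hi. unfold coef, cinner.
  transitivity (csum (fun x => Cmul (deltaC i x) (v x)) D).
  { symmetry; apply csum_delta_l; auto. }
  rewrite (csum_ext (fun c => Cmul _ (b c i))
    (fun c => csum (fun x => Cmul (Cmul (Cconj (b c x)) (v x)) (b c i)) D)).
  2:{ intros c _. rewrite <- csum_scal_r. reflexivity. }
  rewrite csum_swap. apply csum_ext. intros x Hx.
  rewrite (csum_ext _ (fun c => Cmul (v x) (Cmul (b c i) (Cconj (b c x))))) by (intros; ring).
  rewrite csum_scal, basis_complete by auto. ring.
Qed.

Lemma parseval v : rsum (fun c => Cnorm2 (coef v c)) D = rsum (fun i => Cnorm2 (v i)) D.
Proof.
  apply (f_equal Re (x := Cofreal _) (y := Cofreal _)).
  rewrite <- !csum_ofreal.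
  rewrite (csum_ext (fun k => Cofreal (Cnorm2 (v k))) (fun x => Cmul (Cconj (v x)) (v x)))
    by (intros; rewrite Cmul_conj_l; auto).
  rewrite (csum_ext (fun k => Cofreal (Cnorm2 (coef v k))) (fun c => csum (fun x => csum (fun y =>
     Cmul (Cmul (Cconj (v x)) (v y)) (Cmul (b c x) (Cconj (b c y)))) D) D)).
  2:{ intros c _. rewrite <- Cmul_conj_l. unfold coef, cinner. rewrite Cconj_csum, csum_mul.
      apply csum_ext; intros x _; apply csum_ext; intros y _. rewrite Cconj_mul, Cconj_conj. ring. }
  rewrite csum_swap. apply csum_ext; intros x Hx. rewrite csum_swap.
  rewrite (csum_ext _ (fun y => Cmul (deltaC x y) (Cmul (Cconj (v x)) (v y)))).
  2:{ intros y Hy. rewrite csum_scal, basis_complete by auto. ring. }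
  rewrite csum_delta_l; auto.
Qed.

Lemma hat_expand X c e :
  hat X c e = csum (fun i => csum (fun k => Cmul (Cconj (b c i)) (Cmul (X i k) (b e k))) D) D.
Proof. unfold hat, cinner. apply csum_ext; intros i _. unfold mvmul. rewrite <- csum_scal. auto. Qed.

Lemma hat_ext X Y c a : (forall i j, (i < D)%nat -> (j < D)%nat -> X i j = Y i j) ->
  hat X c a = hat Y c a.
Proof.
  intros HXY. unfold hat, cinner, mvmul. apply csum_ext; intros i Hi. f_equal.
  apply csum_ext; intros j Hj. rewrite HXY; auto.
Qed.

Lemma mvmul_assoc X Y v i : mvmul D (mmul D X Y) v i = mvmul D X (mvmul D Y v) i.
Proof.
  unfold mvmul, mmul.
  rewrite (csum_ext (fun k => Cmul (csum _ D) (v k))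
     (fun k => csum (fun j => Cmul (X i j) (Cmul (Y j k) (v k))) D)).
  2:{ intros k _. rewrite <- csum_scal_r. apply csum_ext; intros; ring. }
  rewrite csum_swap. apply csum_ext; intros j _. rewrite csum_scal. auto.
Qed.

(** Matrix elements of a product: insert the resolution of identity. *)
Lemma hat_mmul X Y c a : (c < D)%nat -> (a < D)%nat ->
  hat (mmul D X Y) c a = csum (fun e => Cmul (hat X c e) (hat Y e a)) D.
Proof.
  intros Hc Ha. unfold hat at 1, cinner at 1.
  rewrite (csum_ext _ (fun i => csum (fun k => Cmul (Cconj (b c i)) (Cmul (X i k)
       (csum (fun e => Cmul (hat Y e a) (b e k)) D))) D)).
  2:{ intros i _. rewrite mvmul_assoc. unfold mvmul at 1. rewrite <- csum_scal.
      apply csum_ext; intros k Hk. rewrite (expansion (mvmul D Y (b a)) k Hk). reflexivity. }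
  rewrite (csum_ext (fun e => Cmul (hat X c e) (hat Y e a))
    (fun e => csum (fun i => csum (fun k => Cmul (Cconj (b c i)) (Cmul (X i k) (Cmul (hat Y e a) (b e k)))) D) D)).
  2:{ intros e _. rewrite hat_expand, <- csum_scal_r. apply csum_ext; intros i _.
      rewrite <- csum_scal_r. apply csum_ext; intros; ring. }
  symmetry. rewrite csum_swap. apply csum_ext; intros i _.
  rewrite csum_swap. apply csum_ext; intros k _. rewrite !csum_scal. auto.
Qed.

Lemma trace_hat Y : ctrace D Y = csum (fun a => hat Y a a) D.
Proof.
  unfold ctrace, hat, cinner, mvmul.
  rewrite (csum_ext (fun a => csum (fun i => Cmul (Cconj (b a i)) _) D)
    (fun a => csum (fun i => csum (fun j => Cmul (Y i j) (Cmul (b a j) (Cconj (b a i)))) D) D)).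
  2:{ intros a _. apply csum_ext; intros i _. rewrite <- csum_scal. apply csum_ext; intros; ring. }
  rewrite csum_swap. apply csum_ext; intros i Hi. rewrite csum_swap.
  rewrite (csum_ext _ (fun j => Cmul (deltaC j i) (Y i j))).
  2:{ intros j Hj. rewrite csum_scal, basis_complete by auto. ring. }
  rewrite csum_delta_r; auto.
Qed.

Lemma hat_adj X c a : hat (madj X) c a = Cconj (hat X a c).
Proof.
  unfold hat, cinner, mvmul, madj. rewrite Cconj_csum.
  rewrite (csum_ext (fun i => Cconj (Cmul _ _))
    (fun j => csum (fun i => Cmul (b a j) (Cmul (Cconj (X j i)) (Cconj (b c i)))) D)).
  2:{ intros j _. rewrite Cconj_mul, Cconj_conj, Cconj_csum, <- csum_scal.
      apply csum_ext; intros; rewrite Cconj_mul; ring. }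
  rewrite csum_swap. apply csum_ext; intros i _.
  rewrite <- csum_scal. apply csum_ext; intros; ring.
Qed.

Lemma hat_scale z X c a : hat (mscale z X) c a = Cmul z (hat X c a).
Proof.
  unfold hat, cinner, mvmul, mscale. rewrite <- csum_scal. apply csum_ext; intros i _.
  rewrite (csum_ext _ (fun k => Cmul z (Cmul (X i k) (b a k)))) by (intros; ring).
  rewrite csum_scal. ring.
Qed.

Lemma hat_sum (G : nat -> mat) K c a :
  hat (fun y x => csum (fun j => G j y x) K) c a = csum (fun j => hat (G j) c a) K.
Proof.
  rewrite hat_expand.
  rewrite (csum_ext _ (fun j => csum (fun i => csum (fun k =>
     Cmul (Cconj (b c i)) (Cmul (G j i k) (b a k))) D) D) K) by (intros; apply hat_expand).
  symmetry. rewrite csum_swap. apply csum_ext; intros i _. rewrite csum_swap.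
  apply csum_ext; intros k _. rewrite <- csum_scal_r, <- csum_scal. auto.
Qed.

Fixpoint Cpow (z : Cpx) (k : nat) : Cpx :=
  match k with O => C1 | S k' => Cmul z (Cpow z k') end.

Lemma hat_mpow X k (w : nat -> Cpx) :
  (forall c e, (c < D)%nat -> (e < D)%nat -> hat X c e = Cmul (deltaC c e) (w e)) ->
  forall c a, (c < D)%nat -> (a < D)%nat -> hat (mpow D X k) c a = Cmul (deltaC c a) (Cpow (w a) k).
Proof.
  intros HX. induction k; intros c a Hc Ha.
  - simpl. unfold deltaC at 1. rewrite <- Hon by auto. unfold hat, cinner. rewrite <- csum_scal_r.
    apply csum_ext; intros i Hi. unfold mvmul, mid.
    rewrite (csum_ext _ (fun k => Cmul (deltaC i k) (b a k))) by auto.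
    rewrite csum_delta_l by auto. ring.
  - simpl mpow. rewrite hat_mmul by auto.
    rewrite (csum_ext _ (fun e => Cmul (deltaC c e) (Cmul (w e) (Cmul (deltaC e a) (Cpow (w a) k))))).
    2:{ intros e He. rewrite HX, IHk by auto. ring. }
    rewrite csum_delta_l by auto. simpl. unfold deltaC.
    destruct (Nat.eqb_spec c a); subst; ring.
Qed.

Definition hs2 (N : nat) (X : mat) : R := rsum (fun y => rsum (fun x => Cnorm2 (X y x)) N) N.

Lemma diag_bound X : rsum (fun a => Cnorm2 (hat X a a)) D <= hs2 D X.
Proof.
  unfold hs2.
  apply Rle_trans with (rsum (fun a => rsum (fun c => Cnorm2 (hat X c a)) D) D).
  { apply rsum_le. intros a Ha. apply (Cnorm2_le_sum_single (fun c => hat X c a)); auto. }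
  rewrite (rsum_ext _ (fun a => rsum (fun y => Cnorm2 (mvmul D X (b a) y)) D))
    by (intros a Ha; apply (parseval (mvmul D X (b a)))).
  rewrite rsum_swap. right. apply rsum_ext. intros y Hy.
  set (w := fun x => Cconj (X y x)).
  rewrite (rsum_ext _ (fun a => Cnorm2 (coef w a))).
  2:{ intros a Ha. rewrite <- Cnorm2_conj. f_equal. unfold coef, cinner, mvmul, w.
      rewrite Cconj_csum. apply csum_ext. intros; rewrite Cconj_mul; ring. }
  rewrite parseval. apply rsum_ext. intros x _. apply Cnorm2_conj.
Qed.

End Basis.

Lemma opnorm_sq D X M v : 0 < M -> opnorm_le D X M ->
  rsum (fun i => Cnorm2 (mvmul D X v i)) D <= M * M * rsum (fun i => Cnorm2 (v i)) D.
Proof.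
  intros HM H. specialize (H v).
  assert (Hsq : forall w, vnorm D w * vnorm D w = rsum (fun i => Cnorm2 (w i)) D).
  { intros w. apply sqrt_sqrt, rsum_nonneg; intros; apply Cnorm2_nonneg. }
  rewrite <- !Hsq.
  assert (0 <= vnorm D (mvmul D X v)) by apply sqrt_pos.
  assert (0 <= vnorm D v) by apply sqrt_pos.
  assert (vnorm D (mvmul D X v) * vnorm D (mvmul D X v) <= (M * vnorm D v) * (M * vnorm D v))
    by (apply Rmult_le_compat; auto). nra.
Qed.

(** ‖X‖_HS² ≤ D ‖X‖², column by column. *)
Lemma HS_bound D (X : mat) M : 0 < M -> opnorm_le D X M ->
  hs2 D X <= INR D * (M * M).
Proof.
  intros HM Hop. unfold hs2. rewrite rsum_swap, <- rsum_const. apply rsum_le. intros x Hx.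
  set (e := fun i => deltaC i x).
  rewrite (rsum_ext _ (fun y => Cnorm2 (mvmul D X e y))).
  2:{ intros y Hy. unfold mvmul, e. rewrite (csum_ext _ (fun k => Cmul (deltaC k x) (X y k)))
        by (intros; ring). rewrite csum_delta_r; auto. }
  eapply Rle_trans. apply opnorm_sq; eauto.
  rewrite (rsum_ext _ (fun i => deltaR x i * 1)), rsum_delta_l by
    (auto; intros i _; unfold e, deltaC, deltaR, Cnorm2; rewrite Nat.eqb_sym;
     destruct (Nat.eqb x i); simpl; ring).
  lra.
Qed.

Section BasisNorm.
Variable D : nat.
Variable b : nat -> vec.
Hypothesis Hon : forall j k, (j < D)%nat -> (k < D)%nat ->
  cinner D (b j) (b k) = if Nat.eqb j k then C1 else C0.

Lemma colsum X M a : 0 < M -> opnorm_le D X M -> (a < D)%nat ->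
  rsum (fun c => Cnorm2 (hat D b X c a)) D <= M * M.
Proof.
  intros HM Hop Ha.
  change (rsum (fun c => Cnorm2 (hat D b X c a)) D)
    with (rsum (fun c => Cnorm2 (coef D b (mvmul D X (b a)) c)) D).
  rewrite parseval by auto. eapply Rle_trans. apply opnorm_sq; eauto.
  rewrite bnorm by auto. lra.
Qed.

(** Each row has squared norm ≤ ‖X‖² as well: with w = X* b_c one has
    ‖w‖⁴ = <b_c, X w>² ≤ ‖X w‖² ≤ M² ‖w‖². *)
Lemma rowsum X M c : 0 < M -> opnorm_le D X M -> (c < D)%nat ->
  rsum (fun a => Cnorm2 (hat D b X c a)) D <= M * M.
Proof.
  intros HM Hop Hc.
  set (w := mvmul D (madj X) (b c)).
  rewrite (rsum_ext _ (fun a => Cnorm2 (coef D b w a)))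
    by (intros a Ha; rewrite <- Cnorm2_conj, <- hat_adj; reflexivity).
  rewrite parseval by auto.
  set (S := rsum (fun i => Cnorm2 (w i)) D).
  assert (HS : 0 <= S) by (apply rsum_nonneg; intros; apply Cnorm2_nonneg).
  set (z := cinner D (b c) (mvmul D X w)).
  assert (Hz : Re z = S).
  { enough (Cofreal S = z) as <- by reflexivity.
    unfold S, z, cinner. rewrite <- csum_ofreal.
    rewrite (csum_ext (fun i => Cofreal _) (fun i => Cmul (Cconj (w i)) (w i)))
      by (intros; rewrite Cmul_conj_l; auto).
    unfold mvmul at 1. rewrite (csum_ext (fun j => Cmul (Cconj (b c j)) _)
      (fun j => csum (fun i => Cmul (Cmul (Cconj (b c j)) (X j i)) (w i)) D)).
    2:{ intros j _. rewrite <- csum_scal. apply csum_ext; intros; ring. }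
    rewrite csum_swap. apply csum_ext; intros i _. unfold w at 1, mvmul, madj.
    rewrite Cconj_csum, <- csum_scal_r. apply csum_ext; intros; rewrite Cconj_mul, Cconj_conj; ring. }
  assert (S * S <= M * M * S).
  { apply Rle_trans with (Cnorm2 z).
    - unfold Cnorm2. rewrite Hz. nra.
    - apply Rle_trans with (rsum (fun e => Cnorm2 (coef D b (mvmul D X w) e)) D).
      + apply (Cnorm2_le_sum_single (fun e => coef D b (mvmul D X w) e)); auto.
      + rewrite parseval by auto. apply opnorm_sq; auto. }
  destruct (Req_dec S 0) as [->|Hne]; nra.
Qed.
End BasisNorm.

Definition Ccv (u : nat -> Cpx) (l : Cpx) : Prop :=
  Un_cv (fun N => Re (u N)) (Re l) /\ Un_cv (fun N => Im (u N)) (Im l).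

Lemma Ccv_unique u l1 l2 : Ccv u l1 -> Ccv u l2 -> l1 = l2.
Proof. intros [H1 H2] [H3 H4]. apply Cpx_eq; eapply UL_sequence; eauto. Qed.
Lemma Ccv_ext u v l : (forall N, u N = v N) -> Ccv u l -> Ccv v l.
Proof.
  intros E. replace v with u by (apply functional_extensionality; auto). auto.
Qed.
Lemma Ccv_add u v l m : Ccv u l -> Ccv v m -> Ccv (fun N => Cadd (u N) (v N)) (Cadd l m).
Proof. intros [H1 H2] [H3 H4]. split; simpl; apply CV_plus; auto. Qed.
Lemma Ccv_const c : Ccv (fun _ => c) c.
Proof. split; intros e He; exists 0%nat; intros; unfold R_dist; rewrite Rminus_diag, Rabs_R0; auto. Qed.
Lemma Ccv_mul_l w u l : Ccv u l -> Ccv (fun N => Cmul w (u N)) (Cmul w l).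
Proof.
  intros [H1 H2]. destruct (Ccv_const w) as [H3 H4].
  split; simpl; [apply CV_minus | apply CV_plus]; apply CV_mult; auto.
Qed.
Lemma Ccv_csum (u : nat -> nat -> Cpx) (l : nat -> Cpx) K :
  (forall k, (k < K)%nat -> Ccv (fun N => u k N) (l k)) ->
  Ccv (fun N => csum (fun k => u k N) K) (csum l K).
Proof.
  induction K; intros H; simpl.
  - apply Ccv_const.
  - apply Ccv_add. apply IHK; intros; apply H; lia. apply H; lia.
Qed.

Definition expi (th : R) : Cpx := mkCpx (cos th) (sin th).

Lemma expi_add x y : Cmul (expi x) (expi y) = expi (x + y).
Proof. unfold expi. apply Cpx_eq; simpl; [rewrite cos_plus | rewrite sin_plus]; ring. Qed.
Lemma expi_conj x : Cconj (expi x) = expi (- x).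
Proof. unfold expi. apply Cpx_eq; simpl; [rewrite cos_neg | rewrite sin_neg]; ring. Qed.

Definition pterm (th : R) (k : nat) : Cpx := Crscale (/ INR (fact k)) (Cpow (mkCpx 0 th) k).
Definition psum (th : R) (N : nat) : Cpx := csum (pterm th) (S N).

Lemma Cpow_even th m : Cpow (mkCpx 0 th) (2 * m) = Cofreal ((-1) ^ m * th ^ (2 * m)).
Proof.
  induction m. simpl. apply Cpx_eq; simpl; ring.
  replace (2 * S m)%nat with (S (S (2 * m))) by lia.
  change (Cpow ?z (S (S ?k))) with (Cmul z (Cmul z (Cpow z k))). rewrite IHm.
  apply Cpx_eq; simpl; ring.
Qed.

Lemma pterm_even th m : pterm th (2 * m) = Cofreal ((-1) ^ m * th ^ (2 * m) / INR (fact (2 * m))).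
Proof.
  unfold pterm. rewrite Cpow_even. assert (INR (fact (2*m)) <> 0) by (apply not_0_INR, fact_neq_0).
  apply Cpx_eq; unfold Crscale, Cofreal; cbn [Re Im]; field; auto.
Qed.
Lemma pterm_odd th m :
  pterm th (S (2 * m)) = mkCpx 0 ((-1) ^ m * th ^ (S (2 * m)) / INR (fact (S (2 * m)))).
Proof.
  unfold pterm. change (Cpow ?z (S ?k)) with (Cmul z (Cpow z k)). rewrite Cpow_even.
  assert (INR (fact (S (2*m))) <> 0) by (apply not_0_INR, fact_neq_0).
  apply Cpx_eq; simpl; field; auto.
Qed.

(** The even (odd) partial sums of the real (imaginary) part are the
    partial sums of the cosine (sine) series of the standard library. *)
Definition Cser (th : R) M := sum_f_R0 (fun i => cos_n i * (Rsqr th) ^ i) M.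
Definition Sser (th : R) M := th * sum_f_R0 (fun i => sin_n i * (Rsqr th) ^ i) M.

Lemma psum_formula th M :
  Re (psum th (2 * M)) = Cser th M /\ Re (psum th (S (2 * M))) = Cser th M /\
  Im (psum th (S (2 * M))) = Sser th M /\
  Im (psum th (2 * M)) = match M with O => 0 | S M' => Sser th M' end.
Proof.
  assert (Hsq : forall k, (Rsqr th)^k = th^(2*k)).
  { intros k. rewrite pow_mult. unfold Rsqr. f_equal. simpl; ring. }
  induction M.
  - unfold psum, pterm, Cser, Sser, cos_n, sin_n; simpl. repeat split; field.
  - destruct IHM as [H1 [H2 [H3 H4]]].
    assert (A: psum th (2 * S M) = Cadd (psum th (S (2*M))) (pterm th (2 * S M))).
    { replace (2 * S M)%nat with (S (S (2*M))) at 1 by lia. unfold psum. simpl csum. repeat f_equal. lia. }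
    assert (B: psum th (S (2 * S M)) = Cadd (psum th (2 * S M)) (pterm th (S (2 * S M)))) by reflexivity.
    rewrite B, A, pterm_even, pterm_odd. unfold Cofreal. cbn [Re Im Cadd].
    rewrite H2, H3. unfold Cser, Sser. cbn [sum_f_R0].
    assert (F1 : INR (fact (2 * S M)) <> 0) by (apply not_0_INR, fact_neq_0).
    assert (F2 : INR (fact (S (2 * S M))) <> 0) by (apply not_0_INR, fact_neq_0).
    unfold cos_n, sin_n. rewrite !Hsq.
    replace (2 * S M + 1)%nat with (S (2 * S M)) by lia.
    replace (th ^ (S (2 * S M))) with (th * th ^ (2 * S M)) by (simpl; ring).
    repeat split; field; auto.
Qed.

Lemma psum_cv th : Ccv (psum th) (expi th).
Proof.
  assert (Hcos : Un_cv (Cser th) (cos th)).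
  { unfold cos. destruct (exist_cos (Rsqr th)) as [l Hl]. exact Hl. }
  assert (Hsin : Un_cv (Sser th) (sin th)).
  { unfold sin. destruct (exist_sin (Rsqr th)) as [l Hl]. apply CV_mult; [|exact Hl].
    apply (Ccv_const (Cofreal th)). }
  split; intros eps Heps.
  - destruct (Hcos eps Heps) as [N0 HN0]. exists (2 * N0)%nat. intros N HN.
    destruct (Nat.Even_or_Odd N) as [[k Hk]|[k Hk]]; subst N.
    + destruct (psum_formula th k) as [F _]. simpl Re at 2. rewrite F. apply HN0. unfold ge in *; lia.
    + replace (2 * k + 1)%nat with (S (2 * k)) by lia.
      destruct (psum_formula th k) as [_ [F _]]. simpl Re at 2. rewrite F. apply HN0. unfold ge in *; lia.
  - destruct (Hsin eps Heps) as [N0 HN0]. exists (S (2 * N0))%nat. intros N HN.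
    destruct (Nat.Even_or_Odd N) as [[k Hk]|[k Hk]]; subst N.
    + destruct (psum_formula th k) as [_ [_ [_ F]]]. simpl Im at 2. rewrite F.
      destruct k. unfold ge in *; lia. apply HN0. unfold ge in *; lia.
    + replace (2 * k + 1)%nat with (S (2 * k)) by lia.
      destruct (psum_formula th k) as [_ [_ [F _]]]. simpl Im at 2. rewrite F. apply HN0. unfold ge in *; lia.
Qed.

(** ** The time evolution is diagonal in the eigenbasis *)
Section Evolution.
Variable D : nat.
Variable b : nat -> vec.
Hypothesis Hon : forall j k, (j < D)%nat -> (k < D)%nat ->
  cinner D (b j) (b k) = if Nat.eqb j k then C1 else C0.
Variable H : mat.
Variable E : nat -> R.
Hypothesis Heig : forall j i, (j < D)%nat -> (i < D)%nat ->
        mvmul D H (b j) i = Cmul (Cofreal (E j)) (b j i).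

Lemma hatH c e : (c < D)%nat -> (e < D)%nat -> hat D b H c e = Cmul (deltaC c e) (Cofreal (E e)).
Proof.
  intros Hc He. unfold hat.
  transitivity (Cmul (Cofreal (E e)) (cinner D (b c) (b e))).
  - unfold cinner. rewrite <- csum_scal. apply csum_ext; intros i Hi. rewrite Heig by auto. ring.
  - rewrite Hon by auto. unfold deltaC. destruct (Nat.eqb c e); ring.
Qed.

Lemma hat_cv (X : nat -> mat) (Y : mat) c a :
  (forall i j, (i < D)%nat -> (j < D)%nat -> Ccv (fun N => X N i j) (Y i j)) ->
  Ccv (fun N => hat D b (X N) c a) (hat D b Y c a).
Proof.
  intros HX. eapply Ccv_ext; [intros N; symmetry; apply hat_expand|]. rewrite hat_expand.
  apply Ccv_csum; intros i Hi. apply Ccv_csum; intros k Hk.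
  replace (Cmul (Cconj (b c i)) (Cmul (Y i k) (b a k)))
    with (Cmul (Cmul (Cconj (b c i)) (b a k)) (Y i k)) by ring.
  eapply Ccv_ext; [|exact (Ccv_mul_l (Cmul (Cconj (b c i)) (b a k)) _ _ (HX i k Hi Hk))].
  intros N; simpl; ring.
Qed.

Lemma hat_exp_iH (th : R) (U : mat) : is_mexp D (mscale (mkCpx 0 th) H) U ->
  forall c a, (c < D)%nat -> (a < D)%nat ->
  hat D b U c a = Cmul (deltaC c a) (expi (th * E a)).
Proof.
  intros HU c a Hc Ha. set (X := mscale (mkCpx 0 th) H).
  set (PN := fun N i j => csum (fun k => Crscale (/ INR (fact k)) (mpow D X k i j)) (S N)).
  apply (Ccv_unique (fun N => hat D b (PN N) c a)).
  - apply hat_cv. intros i j Hi Hj. destruct (HU i j Hi Hj). split; auto.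
  - eapply Ccv_ext; [|apply Ccv_mul_l, psum_cv]. intros N. symmetry. unfold PN.
    rewrite (hat_ext D b _ (fun y x => csum (fun k =>
       mscale (Cofreal (/ INR (fact k))) (mpow D X k) y x) (S N)))
      by (intros; apply csum_ext; intros; apply Crscale_mul).
    unfold psum. rewrite hat_sum, <- csum_scal. apply csum_ext; intros k _.
    rewrite hat_scale, (hat_mpow D b Hon X k (fun e => Cmul (mkCpx 0 th) (Cofreal (E e)))) by
      (auto; intros; unfold X; rewrite hat_scale, hatH by auto; ring).
    unfold pterm. rewrite Crscale_mul.
    replace (Cmul (mkCpx 0 th) (Cofreal (E a))) with (mkCpx 0 (th * E a))
      by (apply Cpx_eq; simpl; ring). ring.
Qed.
End Evolution.

(** Coquelicot's total integral [RInt] is easier to manipulate than the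
    dependently typed [RiemannInt] of [time_avg_cv]; we work with it and
    convert at the end. *)
Module TimeAverage.
Import Coquelicot.Coquelicot.

Definition ravgcv (f : R -> R) (l : R) : Prop :=
  (forall a b, ex_RInt f a b) /\
  forall eps, 0 < eps -> exists T, forall tau, T < tau -> Rabs (RInt f 0 tau / tau - l) < eps.

Definition avgcv (f : R -> Cpx) (L : Cpx) : Prop :=
  ravgcv (fun t => Defs.Re (f t)) (Defs.Re L) /\ ravgcv (fun t => Defs.Im (f t)) (Defs.Im L).

Lemma avgcv_time f L : avgcv f L -> time_avg_cv f L.
Proof.
  intros [[I1 H1] [I2 H2]].
  exists (fun tau => ex_RInt_Reals_0 _ _ _ (I1 0 tau)).
  exists (fun tau => ex_RInt_Reals_0 _ _ _ (I2 0 tau)).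
  intros eps Heps. destruct (H1 eps Heps) as [T1 HT1]. destruct (H2 eps Heps) as [T2 HT2].
  exists (Rmax T1 T2). intros tau Ht. rewrite <- !RInt_Reals. split.
  - apply HT1. eapply Rle_lt_trans; [apply Rmax_l|eauto].
  - apply HT2. eapply Rle_lt_trans; [apply Rmax_r|eauto].
Qed.

Lemma avgcv_ext f g L : (forall t, f t = g t) -> avgcv f L -> avgcv g L.
Proof. intros E. replace g with f by (apply functional_extensionality; auto). auto. Qed.

Lemma ravgcv_plus f g l1 l2 : ravgcv f l1 -> ravgcv g l2 -> ravgcv (fun t => f t + g t) (l1 + l2).
Proof.
  intros [F1 F2] [G1 G2]. split.
  - intros a b. apply (ex_RInt_plus f g); auto.
  - intros eps Heps. destruct (F2 (eps/2)) as [T1 HT1]; [lra|]. destruct (G2 (eps/2)) as [T2 HT2]; [lra|].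
    exists (Rmax T1 T2). intros tau Ht.
    specialize (HT1 tau ltac:(eapply Rle_lt_trans; [apply Rmax_l|eauto])).
    specialize (HT2 tau ltac:(eapply Rle_lt_trans; [apply Rmax_r|eauto])).
    replace (RInt (fun t => f t + g t) 0 tau) with (RInt f 0 tau + RInt g 0 tau)
      by (symmetry; exact (RInt_plus f g 0 tau (F1 0 tau) (G1 0 tau))).
    replace ((RInt f 0 tau + RInt g 0 tau) / tau - (l1 + l2))
      with ((RInt f 0 tau / tau - l1) + (RInt g 0 tau / tau - l2)) by (unfold Rdiv; ring).
    eapply Rle_lt_trans; [apply Rabs_triang|lra].
Qed.

Lemma avgcv_add f g L1 L2 : avgcv f L1 -> avgcv g L2 ->
  avgcv (fun t => Cadd (f t) (g t)) (Cadd L1 L2).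
Proof. intros [F1 F2] [G1 G2]. split; apply ravgcv_plus; auto. Qed.

Lemma ravgcv_const c : ravgcv (fun _ => c) c.
Proof.
  split.
  - intros a b. apply ex_RInt_const.
  - intros eps Heps. exists 0. intros tau Ht.
    rewrite RInt_const. unfold scal; simpl; unfold mult; simpl.
    replace ((tau - 0) * c / tau - c) with 0 by (field; lra).
    rewrite Rabs_R0; lra.
Qed.

Lemma avgcv_const c : avgcv (fun _ => c) c.
Proof. split; apply ravgcv_const. Qed.

Lemma avgcv_csum (f : nat -> R -> Cpx) (L : nat -> Cpx) N :
  (forall k, (k < N)%nat -> avgcv (f k) (L k)) ->
  avgcv (fun t => csum (fun k => f k t) N) (csum L N).
Proof.
  induction N; intros H; simpl.
  - apply avgcv_const.
  - apply avgcv_add. apply IHN; intros; apply H; lia. apply H; lia.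
Qed.

Lemma trig_RInt p q w a b : w <> 0 ->
  is_RInt (fun t => p * cos (w * t) + q * sin (w * t)) a b
    ((p * sin (w * b) - q * cos (w * b)) / w - (p * sin (w * a) - q * cos (w * a)) / w).
Proof.
  intros Hw.
  apply (is_RInt_derive (fun t => (p * sin (w * t) - q * cos (w * t)) / w)).
  - intros x _. auto_derive; auto. field; auto.
  - intros x _. apply (ex_derive_continuous (K:=R_AbsRing) (V:=R_NormedModule)). auto_derive; auto.
Qed.

(** An oscillating trigonometric function has a bounded primitive (by
    K = (|p| + 2|q|)/|w|), hence vanishing time average. *)
Lemma trig_avg p q w : w <> 0 -> ravgcv (fun t => p * cos (w * t) + q * sin (w * t)) 0.
Proof.
  intros Hw. split.
  - intros a b. eexists. apply trig_RInt; auto.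
  - intros eps Heps. set (K := (Rabs p + Rabs q + Rabs q) / Rabs w).
    assert (Hwp : 0 < Rabs w) by (apply Rabs_pos_lt; auto).
    assert (HK : 0 <= K) by (unfold K; apply Rmult_le_pos;
      [generalize (Rabs_pos p) (Rabs_pos q); lra | left; apply Rinv_0_lt_compat; auto]).
    exists (K / eps). intros tau Ht.
    assert (Htau : 0 < tau).
    { assert (0 <= K / eps) by (apply Rmult_le_pos; [auto| left; apply Rinv_0_lt_compat; auto]). lra. }
    rewrite (is_RInt_unique _ _ _ _ (trig_RInt p q w 0 tau Hw)), Rmult_0_r, sin_0, cos_0.
    assert (Bnd : Rabs ((p * sin (w * tau) - q * cos (w * tau)) / w - (p * 0 - q * 1) / w) <= K).
    { replace ((p * sin (w * tau) - q * cos (w * tau)) / w - (p * 0 - q * 1) / w)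
        with ((p * sin (w * tau) - q * cos (w * tau) + q) / w) by (field; auto).
      unfold Rdiv. rewrite Rabs_mult, Rabs_inv. unfold K, Rdiv.
      apply Rmult_le_compat_r; [left; apply Rinv_0_lt_compat; auto|].
      eapply Rle_trans; [apply Rabs_triang|]. eapply Rle_trans; [apply Rplus_le_compat_r, Rabs_triang|].
      rewrite Rabs_Ropp, !Rabs_mult.
      assert (Rabs (sin (w * tau)) <= 1) by (apply Rabs_le, SIN_bound).
      assert (Rabs (cos (w * tau)) <= 1) by (apply Rabs_le, COS_bound).
      generalize (Rabs_pos p) (Rabs_pos q). nra. }
    rewrite Rminus_0_r. unfold Rdiv at 1. rewrite Rabs_mult, Rabs_inv, (Rabs_right tau) by lra.
    apply (Rmult_lt_reg_r tau); auto. rewrite Rmult_assoc, Rinv_l, Rmult_1_r by lra.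
    apply Rle_lt_trans with K; auto.
    apply (Rmult_lt_reg_r (/ eps)); [apply Rinv_0_lt_compat; auto|].
    replace (eps * tau * / eps) with tau by (field; lra). auto.
Qed.

Lemma avgcv_term c w :
  avgcv (fun t => Cmul c (expi (w * t))) (if Req_EM_T w 0 then c else C0).
Proof.
  destruct (Req_EM_T w 0) as [->|Hw].
  - apply avgcv_ext with (fun _ => c); [|apply avgcv_const].
    intros t. rewrite Rmult_0_l. unfold expi. rewrite cos_0, sin_0. apply Cpx_eq; simpl; ring.
  - split.
    + replace (fun t => Defs.Re (Cmul c (expi (w * t))))
        with (fun t => Defs.Re c * cos (w * t) + - Defs.Im c * sin (w * t))
        by (apply functional_extensionality; intros t; simpl; ring).
      apply trig_avg; auto.
    + replace (fun t => Defs.Im (Cmul c (expi (w * t))))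
        with (fun t => Defs.Im c * cos (w * t) + Defs.Re c * sin (w * t))
        by (apply functional_extensionality; intros t; simpl; ring).
      apply trig_avg; auto.
Qed.
End TimeAverage.

Section Digits.
Local Open Scope nat_scope.
Variable d : nat.
Hypothesis Hd : d <> 0.

Lemma dig_lt k x : dig d k x < d.
Proof. unfold dig. apply Nat.mod_upper_bound; auto. Qed.

Lemma dig_S k x : dig d (S k) x = dig d k (x / d).
Proof. unfold dig. rewrite Nat.pow_succ_r', Nat.Div0.div_div. reflexivity. Qed.
Lemma dig_0 x : dig d 0 x = x mod d.
Proof. unfold dig. rewrite Nat.pow_0_r, Nat.div_1_r. reflexivity. Qed.

Lemma pow_pos k : d ^ k <> 0.
Proof. apply Nat.pow_nonzero; auto. Qed.

Lemma dig_ext n : forall x y, x < d ^ n -> y < d ^ n ->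
  (forall k, k < n -> dig d k x = dig d k y) -> x = y.
Proof.
  induction n; intros x y Hx Hy H.
  - simpl in *. lia.
  - rewrite (Nat.div_mod_eq x d), (Nat.div_mod_eq y d).
    assert (E0 := H 0 ltac:(lia)). rewrite !dig_0 in E0. rewrite E0.
    f_equal. f_equal. apply IHn.
    + apply Nat.Div0.div_lt_upper_bound. rewrite <- Nat.pow_succ_r'. auto.
    + apply Nat.Div0.div_lt_upper_bound. rewrite <- Nat.pow_succ_r'. auto.
    + intros k Hk. rewrite <- !dig_S. apply H. lia.
Qed.

Fixpoint num (c : nat -> nat) (n : nat) : nat :=
  match n with O => 0 | S n' => num c n' + c n' * d ^ n' end.

Lemma num_lt c n : (forall k, k < n -> c k < d) -> num c n < d ^ n.
Proof.
  induction n; intros H; simpl. lia.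
  assert (num c n < d ^ n) by (apply IHn; intros; apply H; lia).
  assert (c n < d) by (apply H; lia).
  assert (c n * d ^ n <= (d - 1) * d ^ n) by (apply Nat.mul_le_mono_r; lia).
  assert ((d - 1) * d ^ n + d ^ n = d * d ^ n) by (destruct d; [lia| simpl; rewrite Nat.sub_0_r; ring]).
  lia.
Qed.

Lemma dig_num c n : (forall k, k < n -> c k < d) -> forall k, k < n -> dig d k (num c n) = c k.
Proof.
  induction n; intros H k Hk. lia. simpl.
  assert (Hn : num c n < d ^ n) by (apply num_lt; intros; apply H; lia).
  destruct (Nat.eq_dec k n) as [->|Hne].
  - unfold dig. rewrite Nat.div_add by apply pow_pos.
    rewrite Nat.div_small by auto. simpl. apply Nat.mod_small. apply H; lia.
  - assert (Hkn : k < n) by lia.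
    unfold dig.
    replace (c n * d ^ n) with ((c n * d ^ (n - S k)) * d * d ^ k).
    2:{ assert (E : d ^ n = d ^ (n - S k) * d * d ^ k).
        { replace n with (n - S k + 1 + k) at 1 by lia. rewrite !Nat.pow_add_r, Nat.pow_1_r. reflexivity. }
        rewrite E. ring. }
    rewrite Nat.div_add by apply pow_pos. rewrite Nat.Div0.mod_add.
    fold (dig d k (num c n)). apply IHn; auto.
Qed.

End Digits.

Section Sites.
Local Open Scope nat_scope.
Variable n : nat.
Hypothesis Hn : n <> 0.

Lemma mod_plus_n j : (j + n) mod n = j mod n.
Proof. replace (j + n) with (j + 1 * n) by lia. apply Nat.Div0.mod_add. Qed.

(** The shift by s has the explicit inverse k ↦ k + (n - s mod n). *)
Lemma sig_inv k s : k < n -> ((k + s) mod n + (n - s mod n)) mod n = k.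
Proof.
  intros Hk. rewrite Nat.Div0.add_mod_idemp_l.
  assert (Hs := Nat.div_mod_eq s n). assert (Hr := Nat.mod_upper_bound s n Hn).
  set (q := s / n) in *. set (r := s mod n) in *.
  replace (k + s + (n - r)) with (k + (q + 1) * n) by (rewrite Nat.mul_add_distr_r, Nat.mul_1_l, (Nat.mul_comm q n); lia).
  rewrite Nat.Div0.mod_add. apply Nat.mod_small; auto.
Qed.

Lemma sig_inj k k' s : k < n -> k' < n -> (k + s) mod n = (k' + s) mod n -> k = k'.
Proof.
  intros Hk Hk' E. rewrite <- (sig_inv k s Hk), <- (sig_inv k' s Hk'), E. auto.
Qed.

Lemma sig_surj j s : j < n -> exists k, k < n /\ (k + s) mod n = j.
Proof.
  intros Hj. exists ((j + (n - s mod n)) mod n). split. apply Nat.mod_upper_bound; auto.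
  rewrite Nat.Div0.add_mod_idemp_l.
  assert (Hs := Nat.div_mod_eq s n). assert (Hr := Nat.mod_upper_bound s n Hn).
  set (q := s / n) in *. set (r := s mod n) in *.
  replace (j + (n - r) + s) with (j + (q + 1) * n) by (rewrite Nat.mul_add_distr_r, Nat.mul_1_l, (Nat.mul_comm q n); lia).
  rewrite Nat.Div0.mod_add. apply Nat.mod_small; auto.
Qed.

Lemma succ_pred_mod k : k < n -> (((k + n - 1) mod n) + 1) mod n = k.
Proof.
  intros Hk. destruct k.
  - replace ((0 + n - 1) mod n + 1) with n. apply Nat.Div0.mod_same.
    rewrite Nat.mod_small by lia; lia.
  - replace (S k + n - 1) with (k + n) by lia. rewrite mod_plus_n, (Nat.mod_small k) by lia.
    rewrite Nat.mod_small; lia.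
Qed.
Lemma pred_succ_mod j : j < n -> (((j + 1) mod n) + n - 1) mod n = j.
Proof.
  intros Hj. destruct (Nat.eq_dec (j + 1) n) as [E|E].
  - rewrite E, Nat.Div0.mod_same. simpl. rewrite Nat.mod_small; lia.
  - rewrite (Nat.mod_small (j + 1)) by lia. replace (j + 1 + n - 1) with (j + n) by lia.
    rewrite mod_plus_n. rewrite Nat.mod_small; lia.
Qed.

Lemma in_window_iff s0 m k : s0 < n -> k < n ->
  (in_window n s0 m k = true <-> exists t, t < m /\ k = (s0 + t) mod n).
Proof.
  intros Hs0 Hk. unfold in_window. rewrite Nat.ltb_lt. split.
  - intros H. exists ((k + n - s0) mod n). split; auto.
    rewrite Nat.Div0.add_mod_idemp_r. replace (s0 + (k + n - s0)) with (k + n) by lia.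
    rewrite mod_plus_n, Nat.mod_small; auto.
  - intros [t [Ht ->]].
    replace ((s0 + t) mod n + n - s0) with ((s0 + t) mod n + (n - s0)) by lia.
    rewrite Nat.Div0.add_mod_idemp_l. replace (s0 + t + (n - s0)) with (t + n) by lia.
    rewrite mod_plus_n. eapply Nat.le_lt_trans. apply Nat.Div0.mod_le. auto.
Qed.
End Sites.

Definition shifted_window (n s0 m s j : nat) : bool :=
  existsb (fun t => Nat.eqb j ((s0 + s + t) mod n)) (seq 0 m).

Lemma shifted_window_iff (n s0 m s j : nat) :
  shifted_window n s0 m s j = true <-> exists t, (t < m)%nat /\ j = ((s0 + s + t) mod n)%nat.
Proof.
  unfold shifted_window. rewrite existsb_exists. split.
  - intros [t [Ht E]]. apply in_seq in Ht. apply Nat.eqb_eq in E. exists t; split; auto; lia.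
  - intros [t [Ht E]]. exists t. split. apply in_seq; lia. apply Nat.eqb_eq; auto.
Qed.

(** The lattice translation acts on basis labels by the digit rotation
    [rho]: (T v)(y) = v(rho y), and [rhos s] = rho^s rotates by s sites. *)
Section Rot.
Local Open Scope nat_scope.
Variable d n : nat.
Hypothesis Hd : d <> 0.
Hypothesis Hn : n <> 0.

Definition rho (y : nat) : nat := num d (fun k => dig d ((k + 1) mod n) y) n.
Definition rhos (s y : nat) : nat := Nat.iter s rho y.

Lemma rho_lt y : rho y < d ^ n.
Proof. apply num_lt; auto. intros; apply dig_lt; auto. Qed.
Lemma dig_rho k y : k < n -> dig d k (rho y) = dig d ((k + 1) mod n) y.
Proof. intros Hk. unfold rho. rewrite dig_num; auto. intros; apply dig_lt; auto. Qed.
Lemma rhos_lt s y : y < d ^ n -> rhos s y < d ^ n.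
Proof. intros Hy. destruct s; simpl; auto. apply rho_lt. Qed.
Lemma dig_rhos s k y : k < n -> dig d k (rhos s y) = dig d ((k + s) mod n) y.
Proof.
  revert k. induction s; intros k Hk.
  - simpl. rewrite Nat.add_0_r, Nat.mod_small; auto.
  - change (rhos (S s) y) with (rho (rhos s y)). rewrite dig_rho by auto.
    rewrite IHs by (apply Nat.mod_upper_bound; auto).
    rewrite Nat.Div0.add_mod_idemp_l. f_equal. f_equal. lia.
Qed.
Lemma rhos_inj s y y' : y < d ^ n -> y' < d ^ n -> rhos s y = rhos s y' -> y = y'.
Proof.
  intros Hy Hy' E. apply (dig_ext d Hd n); auto. intros j Hj.
  destruct (sig_surj n Hn j s Hj) as [k [Hk Hks]].
  rewrite <- Hks, <- !dig_rhos by auto. rewrite E. auto.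
Qed.

Lemma transl_eq y x : y < d ^ n -> x < d ^ n ->
  transl d n y x = if Nat.eqb x (rho y) then C1 else C0.
Proof.
  intros Hy Hx. unfold transl.
  destruct (Nat.eqb_spec x (rho y)) as [->|Hne].
  - replace (forallb _ (seq 0 n)) with true; auto. symmetry. apply forallb_forall.
    intros k Hk. apply in_seq in Hk. apply Nat.eqb_eq.
    rewrite dig_rho by (apply Nat.mod_upper_bound; auto).
    rewrite succ_pred_mod by (auto; lia). auto.
  - destruct (forallb _ (seq 0 n)) eqn:F; auto. exfalso. apply Hne.
    rewrite forallb_forall in F.
    apply (dig_ext d Hd n); auto. apply rho_lt. intros j Hj.
    rewrite dig_rho by auto.
    assert (Hk : (j + 1) mod n < n) by (apply Nat.mod_upper_bound; auto).
    specialize (F ((j + 1) mod n) ltac:(apply in_seq; lia)). apply Nat.eqb_eq in F.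
    rewrite F, pred_succ_mod; auto.
Qed.

Lemma transl_mv v y : y < d ^ n -> mvmul (d ^ n) (transl d n) v y = v (rho y).
Proof.
  intros Hy. unfold mvmul.
  rewrite (csum_ext _ (fun x => Cmul (deltaC x (rho y)) (v x))).
  apply csum_delta_r. apply rho_lt.
  intros x Hx. rewrite transl_eq; auto.
Qed.
End Rot.

(** Splitting the sites into P and its complement, a label x is a pair
    (x|_P, x|_{not P}).  If f only depends on x|_P and g only on x|_{not P},
    then (Σ f)(Σ g) = D Σ f g: the sum over pairs (x, y) is reindexed by the
    bijection (x, y) ↦ (splice x y, splice y x). *)
Section Indep.
Local Open Scope nat_scope.
Variable d n : nat.
Hypothesis Hd : d <> 0.
Hypothesis Hn : n <> 0.
Let D := d ^ n.
Variable P : nat -> bool.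

Definition splice (x y : nat) : nat := num d (fun k => if P k then dig d k x else dig d k y) n.
Lemma splice_lt x y : splice x y < D.
Proof. apply num_lt; auto. intros k _. destruct (P k); apply dig_lt; auto. Qed.
Lemma dig_splice x y k : k < n -> dig d k (splice x y) = if P k then dig d k x else dig d k y.
Proof. intros Hk. unfold splice. rewrite dig_num; auto. intros j _. destruct (P j); apply dig_lt; auto. Qed.
Lemma splice_inv x y : x < D -> splice (splice x y) (splice y x) = x.
Proof.
  intros Hx. apply (dig_ext d Hd n); auto. apply splice_lt. intros k Hk.
  rewrite !dig_splice by auto. destruct (P k) eqn:E; auto.
Qed.

Lemma D_pos : D <> 0.
Proof. apply pow_pos; auto. Qed.

Lemma csum_mul_split (f g : nat -> Cpx) :
  (forall x x', x < D -> x' < D -> (forall j, j < n -> P j = true -> dig d j x = dig d j x') -> f x = f x') ->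
  (forall x x', x < D -> x' < D -> (forall j, j < n -> P j = false -> dig d j x = dig d j x') -> g x = g x') ->
  Cmul (csum f D) (csum g D) = Cmul (Cofreal (INR D)) (csum (fun x => Cmul (f x) (g x)) D).
Proof.
  intros Hf Hg. assert (HD := D_pos).
  rewrite csum_mul, csum_flatten by auto.
  set (sg := fun p => splice (p / D) (p mod D) * D + splice (p mod D) (p / D)).
  assert (Hdiv : forall p, sg p / D = splice (p / D) (p mod D)).
  { intros p. unfold sg. rewrite Nat.add_comm, Nat.div_add, Nat.div_small; auto. apply splice_lt. }
  assert (Hmod : forall p, sg p mod D = splice (p mod D) (p / D)).
  { intros p. unfold sg. rewrite Nat.add_comm, Nat.Div0.mod_add, Nat.mod_small; auto. apply splice_lt. }
  assert (Hp : forall p, p < D * D -> p / D < D /\ p mod D < D).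
  { intros p Hp. split. apply Nat.Div0.div_lt_upper_bound. lia. apply Nat.mod_upper_bound; auto. }
  rewrite <- (csum_reindex sg (fun p => Cmul (f (p / D)) (g (p mod D)))).
  - rewrite (csum_ext _ (fun p => Cmul (f (p / D)) (g (p / D)))).
    2:{ intros p Hpp. rewrite Hdiv, Hmod. destruct (Hp p Hpp) as [h1 h2]. f_equal.
        - apply Hf; auto. apply splice_lt. intros j Hj Pj. rewrite dig_splice, Pj; auto.
        - apply Hg; auto. apply splice_lt. intros j Hj Pj. rewrite dig_splice, Pj; auto. }
    rewrite <- (csum_flatten (fun x y => Cmul (f x) (g x))) by auto.
    rewrite <- csum_scal. apply csum_ext. intros x _.
    rewrite (csum_ext _ (fun _ => Cmul (Cofreal 1) (Cmul (f x) (g x)))) by (intros; apply Cpx_eq; simpl; ring).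
    rewrite (csum_scal_r (Cmul (f x) (g x)) (fun _ => Cofreal 1)), csum_ofreal, rsum_const. apply Cpx_eq; simpl; ring.
  - intros p Hpp. destruct (Hp p Hpp) as [h1 h2]. unfold sg.
    assert (splice (p / D) (p mod D) < D) by apply splice_lt. assert (splice (p mod D) (p / D) < D) by apply splice_lt. nia.
  - intros p q Hpp Hq E. destruct (Hp p Hpp) as [p1 p2]. destruct (Hp q Hq) as [q1 q2].
    assert (E1 : splice (p / D) (p mod D) = splice (q / D) (q mod D)) by (rewrite <- !Hdiv, E; auto).
    assert (E2 : splice (p mod D) (p / D) = splice (q mod D) (q / D)) by (rewrite <- !Hmod, E; auto).
    assert (X1 : p / D = q / D).
    { rewrite <- (splice_inv (p / D) (p mod D)), <- (splice_inv (q / D) (q mod D)) by auto. rewrite E1, E2; auto. }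
    assert (X2 : p mod D = q mod D).
    { rewrite <- (splice_inv (p mod D) (p / D)), <- (splice_inv (q mod D) (q / D)) by auto. rewrite E1, E2; auto. }
    rewrite (Nat.div_mod_eq p D), (Nat.div_mod_eq q D), X1, X2. auto.
Qed.
End Indep.

(** ** A local operator and its translates *)
Section Local.
Local Open Scope nat_scope.
Variable d n : nat.
Hypothesis Hd : d <> 0.
Hypothesis Hn : n <> 0.
Let D := d ^ n.
Variable A : mat.
Variables (s0 m : nat) (a : nat -> nat -> Cpx).
Hypothesis Hs0 : s0 < n.
Hypothesis HA : forall y x, y < d ^ n -> x < d ^ n ->
  A y x = if agree_off d n s0 m y x then a (proj_window d n s0 m y) (proj_window d n s0 m x) else C0.

Let Pw (s : nat) : nat -> bool := shifted_window n s0 m s.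

(** The translate of A by s sites, (T^{-s} A T^s)(y, x) = A(rho^s y, rho^s x). *)
Definition As (s y x : nat) : Cpx := A (rhos d n s y) (rhos d n s x).

Lemma agree_refl z : agree_off d n s0 m z z = true.
Proof.
  unfold agree_off. apply forallb_forall. intros k _. rewrite Nat.eqb_refl, orb_true_r. auto.
Qed.

Lemma window_shift k s : k < n -> in_window n s0 m k = true -> Pw s ((k + s) mod n) = true.
Proof.
  intros Hk Hw. apply (in_window_iff n Hn s0 m k Hs0 Hk) in Hw. destruct Hw as [t [Ht ->]].
  apply shifted_window_iff. exists t. split; auto. rewrite Nat.Div0.add_mod_idemp_l. f_equal. lia.
Qed.

Lemma As_nonzero_agree s y x : y < D -> x < D -> As s y x <> C0 ->
  forall j, j < n -> Pw s j = false -> dig d j y = dig d j x.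
Proof.
  intros Hy Hx Hnz j Hj Hp. unfold As in Hnz.
  rewrite HA in Hnz by (apply rhos_lt; auto).
  destruct (agree_off d n s0 m (rhos d n s y) (rhos d n s x)) eqn:Ag; [|congruence].
  unfold agree_off in Ag. rewrite forallb_forall in Ag.
  destruct (sig_surj n Hn j s Hj) as [k [Hk Hks]].
  specialize (Ag k ltac:(apply in_seq; lia)).
  apply orb_true_iff in Ag. destruct Ag as [W|E].
  - apply (window_shift k s Hk) in W. rewrite Hks in W. congruence.
  - apply Nat.eqb_eq in E. rewrite !(dig_rhos d n Hd Hn) in E by auto. rewrite Hks in E. auto.
Qed.

Lemma diag_dep s x x' : x < D -> x' < D ->
  (forall j, j < n -> Pw s j = true -> dig d j x = dig d j x') -> As s x x = As s x' x'.
Proof.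
  intros Hx Hx' H. unfold As. rewrite !HA by (apply rhos_lt; auto). rewrite !agree_refl.
  assert (E : proj_window d n s0 m (rhos d n s x) = proj_window d n s0 m (rhos d n s x')).
  { unfold proj_window. f_equal. apply map_ext_in. intros k Hk. apply in_seq in Hk.
    destruct (in_window n s0 m k) eqn:W; auto.
    rewrite !(dig_rhos d n Hd Hn) by lia. rewrite H; auto.
    apply Nat.mod_upper_bound; auto. apply window_shift; auto. lia. }
  rewrite E. auto.
Qed.

Lemma trace_As s : ctrace D A = C0 -> csum (fun x => As s x x) D = C0.
Proof.
  intros Ht. unfold As. rewrite (csum_reindex (rhos d n s) (fun z => A z z)).
  exact Ht.
  intros; apply rhos_lt; auto.
  intros k l Hk Hl E. apply (rhos_inj d n Hd Hn s); auto.
Qed.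

(** Two translates with disjoint windows cannot both be nonzero off the
    diagonal, since each acts as the identity outside its own window. *)
Lemma As_cross_offdiag s s' y x : y < D -> x < D -> y <> x ->
  (forall j, j < n -> Pw s j = true -> Pw s' j = true -> False) ->
  Cmul (Cconj (As s y x)) (As s' y x) = C0.
Proof.
  intros Hy Hx Hne Hdisj.
  destruct (classic (As s y x = C0)) as [Z|Z]. { rewrite Z. apply Cpx_eq; simpl; ring. }
  destruct (classic (As s' y x = C0)) as [Z'|Z']. { rewrite Z'. apply Cpx_eq; simpl; ring. }
  exfalso. apply Hne. apply (dig_ext d Hd n); auto. intros j Hj.
  destruct (Pw s j) eqn:P1.
  - destruct (Pw s' j) eqn:P2. exfalso; eapply Hdisj; eauto.
    apply (As_nonzero_agree s'); auto.
  - apply (As_nonzero_agree s); auto.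
Qed.

(** Translates with disjoint windows are Hilbert–Schmidt orthogonal: only
    the diagonal contributes, and there the two factors depend on disjoint
    sets of sites, so the sum factorizes into the two (vanishing) traces. *)
Lemma As_orth s s' : ctrace D A = C0 ->
  (forall j, j < n -> Pw s j = true -> Pw s' j = true -> False) ->
  csum (fun y => csum (fun x => Cmul (Cconj (As s y x)) (As s' y x)) D) D = C0.
Proof.
  intros Ht Hdisj.
  rewrite (csum_ext _ (fun y => Cmul (Cconj (As s y y)) (As s' y y))).
  2:{ intros y Hy.
      rewrite (csum_ext _ (fun x => Cmul (deltaC y x) (Cmul (Cconj (As s y x)) (As s' y x)))).
      - apply csum_delta_l; auto.
      - intros x Hx. unfold deltaC. destruct (Nat.eqb_spec y x) as [->|Hne]; [ring|].
        rewrite As_cross_offdiag by auto. ring. }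
  assert (Split := csum_mul_split d n Hd Hn (Pw s) (fun x => Cconj (As s x x)) (fun x => As s' x x)).
  apply (Cmul_real_cancel (INR D)). apply not_0_INR, D_pos; auto.
  fold D in Split. rewrite <- Split.
  - rewrite <- Cconj_csum, trace_As by auto. rewrite Cconj_0. ring.
  - intros x x' Hx Hx' Hj. f_equal. apply diag_dep; auto.
  - intros x x' Hx Hx' Hj. apply diag_dep; auto. intros j Hjn P2.
    apply Hj; auto. destruct (Pw s j) eqn:P1; auto. exfalso; eapply Hdisj; eauto.
Qed.

Lemma As_norm s : hs2 D (As s) = hs2 D A.
Proof.
  unfold hs2, As.
  rewrite (rsum_ext _ (fun y => rsum (fun x => Cnorm2 (A (rhos d n s y) x)) D)).
  - apply (rsum_reindex (rhos d n s) (fun z => rsum (fun x => Cnorm2 (A z x)) D)).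
    intros; apply rhos_lt; auto.
    intros k l Hk Hl E. apply (rhos_inj d n Hd Hn s); auto.
  - intros y Hy. apply (rsum_reindex (rhos d n s) (fun z => Cnorm2 (A (rhos d n s y) z))).
    intros; apply rhos_lt; auto.
    intros k l Hk Hl E. apply (rhos_inj d n Hd Hn s); auto.
Qed.

End Local.

Lemma Cnorm2_Cpow z s : Cnorm2 (Cpow z s) = Cnorm2 z ^ s.
Proof. induction s; simpl. unfold Cnorm2; simpl; ring. rewrite Cnorm2_mul, IHs. auto. Qed.

(** ** Translation invariance and the diagonal of translated operators

    If H commutes with T and has simple spectrum, then T is diagonal in the
    eigenbasis, T b_a = λ_a b_a with |λ_a| = 1.  Hence every basis vector is
    an eigenvector of the translation, and conjugating an operator by a
    translation does not change its diagonal matrix elements. *)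
Section Transl.
Variable d n : nat.
Hypothesis Hd : d <> 0%nat.
Hypothesis Hn : n <> 0%nat.
Let D := (d ^ n)%nat.
Variable b : nat -> vec.
Hypothesis Hon : forall j k, (j < D)%nat -> (k < D)%nat ->
  cinner D (b j) (b k) = if Nat.eqb j k then C1 else C0.
Variable H : mat.
Variable E : nat -> R.
Hypothesis Heig : forall j i, (j < D)%nat -> (i < D)%nat ->
        mvmul D H (b j) i = Cmul (Cofreal (E j)) (b j i).
Hypothesis Hcomm : mcommute D H (transl d n).
Hypothesis Hdist : forall c a, (c < D)%nat -> (a < D)%nat -> c <> a -> E c <> E a.

Let T := transl d n.

Lemma hatT_off c a : (c < D)%nat -> (a < D)%nat -> c <> a -> hat D b T c a = C0.
Proof.
  intros Hc Ha Hne.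
  assert (HHT : hat D b (mmul D H T) c a = Cmul (Cofreal (E c)) (hat D b T c a)).
  { rewrite hat_mmul by auto.
    rewrite (csum_ext _ (fun e => Cmul (deltaC c e) (Cmul (Cofreal (E e)) (hat D b T e a))))
      by (intros e He; rewrite (hatH D b Hon H E Heig) by auto; ring).
    apply csum_delta_l; auto. }
  assert (HTH : hat D b (mmul D T H) c a = Cmul (Cofreal (E a)) (hat D b T c a)).
  { rewrite hat_mmul by auto.
    rewrite (csum_ext _ (fun e => Cmul (deltaC e a) (Cmul (Cofreal (E a)) (hat D b T c e))))
      by (intros e He; rewrite (hatH D b Hon H E Heig) by auto; ring).
    apply csum_delta_r; auto. }
  assert (Hsame : hat D b (mmul D H T) c a = hat D b (mmul D T H) c a)
    by (apply hat_ext; intros; apply Hcomm; auto).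
  apply (Cmul_real_cancel (E c - E a)); [generalize (Hdist c a Hc Ha Hne); lra|].
  unfold Rminus. rewrite Cofreal_add.
  replace (Cmul (Cadd (Cofreal (E c)) (Cofreal (- E a))) (hat D b T c a))
    with (Csub (hat D b (mmul D H T) c a) (hat D b (mmul D T H) c a))
    by (rewrite HHT, HTH; apply Cpx_eq; simpl; ring).
  rewrite Hsame. ring.
Qed.

Definition lam a := hat D b T a a.

(** Since T acts by relabelling, (T b_a)(i) = b_a(rho i) = λ_a b_a(i). *)
Lemma b_rho a i : (a < D)%nat -> (i < D)%nat -> b a (rho d n i) = Cmul (lam a) (b a i).
Proof.
  intros Ha Hi. rewrite <- (transl_mv d n Hd Hn (b a) i) by auto. fold D.
  rewrite (expansion D b Hon _ i Hi).
  rewrite (csum_ext _ (fun c => Cmul (deltaC c a) (Cmul (lam a) (b c i)))).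
  apply csum_delta_r; auto.
  intros c Hc. change (coef D b (mvmul D (transl d n) (b a)) c) with (hat D b T c a).
  unfold deltaC. destruct (Nat.eqb_spec c a) as [->|Hne].
  - unfold lam. ring.
  - rewrite hatT_off by auto. ring.
Qed.

(** |λ_a| = 1 because rho permutes the labels. *)
Lemma lam_norm a : (a < D)%nat -> Cnorm2 (lam a) = 1.
Proof.
  intros Ha.
  assert (E1 : rsum (fun i => Cnorm2 (b a (rho d n i))) D = rsum (fun i => Cnorm2 (b a i)) D).
  { apply (rsum_reindex (rho d n) (fun i => Cnorm2 (b a i))).
    intros; apply rho_lt; auto.
    intros k l Hk Hl Ekl. apply (rhos_inj d n Hd Hn 1); auto. }
  rewrite (rsum_ext _ (fun i => Cnorm2 (lam a) * Cnorm2 (b a i))) in E1.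
  2:{ intros i Hi. rewrite b_rho, Cnorm2_mul; auto. }
  rewrite rsum_scal, (bnorm D b Hon a Ha) in E1. lra.
Qed.

Lemma b_rhos a s i : (a < D)%nat -> (i < D)%nat -> b a (rhos d n s i) = Cmul (Cpow (lam a) s) (b a i).
Proof.
  intros Ha Hi. induction s.
  - simpl. ring.
  - change (rhos d n (S s) i) with (rho d n (rhos d n s i)).
    rewrite b_rho, IHs; auto. simpl. ring. apply rhos_lt; auto.
Qed.

(** Translates have the same diagonal in the eigenbasis: the phases
    conj(λ_a^s) and λ_a^s picked up by the bra and the ket cancel. *)
Lemma hat_As A s a : (a < D)%nat -> hat D b (As d n A s) a a = hat D b A a a.
Proof.
  intros Ha. set (mu := Cpow (lam a) s).
  assert (Hmu : Cmul (Cconj mu) mu = C1).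
  { rewrite Cmul_conj_l. unfold mu. rewrite Cnorm2_Cpow, lam_norm, pow1 by auto. apply Cpx_eq; simpl; ring. }
  assert (Hb : forall x, (x < D)%nat -> b a x = Cmul (Cconj mu) (b a (rhos d n s x))).
  { intros x Hx. rewrite b_rhos by auto. fold mu.
    replace (Cmul (Cconj mu) (Cmul mu (b a x))) with (Cmul (Cmul (Cconj mu) mu) (b a x)) by ring.
    rewrite Hmu. ring. }
  unfold hat, cinner, mvmul, As.
  rewrite (csum_ext _ (fun y => Cmul (Cconj (b a (rhos d n s y)))
      (csum (fun x => Cmul (A (rhos d n s y) x) (b a x)) D))).
  - apply (csum_reindex (rhos d n s) (fun z => Cmul (Cconj (b a z)) (csum (fun x => Cmul (A z x) (b a x)) D))).
    intros; apply rhos_lt; auto.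
    intros k l Hk Hl Ekl. apply (rhos_inj d n Hd Hn s); auto.
  - intros y Hy.
    rewrite <- (csum_reindex (rhos d n s) (fun x => Cmul (A (rhos d n s y) x) (b a x))).
    2:{ intros; apply rhos_lt; auto. }
    2:{ intros k l Hk Hl Ekl. apply (rhos_inj d n Hd Hn s); auto. }
    rewrite (Hb y Hy).
    rewrite (csum_ext (fun x => Cmul (A (rhos d n s y) (rhos d n s x)) (b a x))
      (fun x => Cmul (Cconj mu) (Cmul (A (rhos d n s y) (rhos d n s x)) (b a (rhos d n s x))))).
    2:{ intros x Hx. rewrite (Hb x Hx). ring. }
    rewrite csum_scal. rewrite Cconj_mul, Cconj_conj.
    transitivity (Cmul (Cmul (Cconj mu) mu) (Cmul (Cconj (b a (rhos d n s y)))
        (csum (fun x => Cmul (A (rhos d n s y) (rhos d n s x)) (b a (rhos d n s x))) D))).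
    ring. rewrite Hmu. ring.
Qed.
End Transl.

(** ** The diagonal of a local operator is small *)

Lemma shifted_windows_disjoint (n s0 m r K j j' i : nat) :
  n <> 0%nat -> (s0 < n)%nat -> (m <= r)%nat -> (K * r <= n)%nat ->
  (j < K)%nat -> (j' < K)%nat -> j <> j' -> (i < n)%nat ->
  shifted_window n s0 m (j * r) i = true -> shifted_window n s0 m (j' * r) i = true -> False.
Proof.
  intros Hn Hs0 Hm HKr Hj Hj' Hne Hi P1 P2.
  apply shifted_window_iff in P1 as [t [Ht Ei]]. apply shifted_window_iff in P2 as [t' [Ht' Ei']].
  assert (Hlt1 : (j * r + t < n)%nat) by nia. assert (Hlt2 : (j' * r + t' < n)%nat) by nia.
  assert (Eq : (j * r + t = j' * r + t')%nat).
  { apply (sig_inj n Hn _ _ s0 Hlt1 Hlt2).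
    replace (j * r + t + s0)%nat with (s0 + j * r + t)%nat by lia.
    replace (j' * r + t' + s0)%nat with (s0 + j' * r + t')%nat by lia. congruence. }
  destruct (Nat.lt_total j j') as [Hl|[Hl|Hl]]; [|lia|].
  - assert (j' * r >= (j + 1) * r)%nat by (apply Nat.mul_le_mono_r; lia). lia.
  - assert (j * r >= (j' + 1) * r)%nat by (apply Nat.mul_le_mono_r; lia). lia.
Qed.

Definition translate_avg (d n : nat) (A : mat) (r K : nat) : mat :=
  fun y x => csum (fun j => Cmul (Cofreal (/ INR K)) (As d n A (j * r) y x)) K.

Section LocalAverage.
Variable d n : nat.
Hypothesis Hd : d <> 0%nat.
Hypothesis Hn : n <> 0%nat.
Let D := (d ^ n)%nat.
Variables (A : mat) (s0 m : nat) (a : nat -> nat -> Cpx).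
Hypothesis Hs0 : (s0 < n)%nat.
Hypothesis HA : forall y x, (y < d ^ n)%nat -> (x < d ^ n)%nat ->
  A y x = if agree_off d n s0 m y x then a (proj_window d n s0 m y) (proj_window d n s0 m x) else C0.
Hypothesis Htr : ctrace D A = C0.
Variables (r K : nat).
Hypothesis Hm : (m <= r)%nat.
Hypothesis HK : (1 <= K)%nat.
Hypothesis HKr : K = 1%nat \/ (K * r <= n)%nat.

Lemma translates_gram j j' : (j < K)%nat -> (j' < K)%nat ->
  csum (fun y => csum (fun x => Cmul (Cconj (As d n A (j * r) y x)) (As d n A (j' * r) y x)) D) D
  = Cmul (deltaC j j') (Cofreal (hs2 D A)).
Proof.
  intros Hj Hj'. unfold deltaC. destruct (Nat.eqb_spec j j') as [<-|Hne].
  - rewrite (csum_ext _ (fun y => Cofreal (rsum (fun x => Cnorm2 (As d n A (j * r) y x)) D))).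
    2:{ intros y _. rewrite <- csum_ofreal. apply csum_ext; intros. rewrite Cmul_conj_l; auto. }
    rewrite csum_ofreal. fold (hs2 D (As d n A (j * r))).
    rewrite (As_norm d n Hd Hn A). fold D. ring.
  - rewrite (As_orth d n Hd Hn A s0 m a Hs0 HA); auto. ring.
    intros i Hi P1 P2. destruct HKr as [->|HKr']; [lia|].
    exact (shifted_windows_disjoint n s0 m r K j j' i Hn Hs0 Hm HKr' Hj Hj' Hne Hi P1 P2).
Qed.

Lemma translate_avg_hs2 : hs2 D (translate_avg d n A r K) = hs2 D A / INR K.
Proof.
  assert (HKR : 0 < INR K) by (apply lt_0_INR; lia).
  set (Z := fun j y x => As d n A (j * r) y x).
  apply (f_equal Re (x := Cofreal _) (y := Cofreal _)). unfold hs2 at 1. rewrite <- csum_ofreal.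
  rewrite (csum_ext _ (fun y => csum (fun x => Cmul (Cofreal (/ INR K * / INR K))
      (csum (fun j => csum (fun j' => Cmul (Cconj (Z j y x)) (Z j' y x)) K) K)) D)).
  2:{ intros y _. rewrite <- csum_ofreal. apply csum_ext; intros x _.
      unfold translate_avg. rewrite csum_scal, Cnorm2_mul, Cofreal_mul.
      rewrite <- (Cmul_conj_l (csum (fun k => As d n A (k * r) y x) K)), Cconj_csum, csum_mul.
      f_equal. apply Cpx_eq; unfold Cnorm2; simpl; ring. }
  rewrite (csum_ext _ (fun y => Cmul (Cofreal (/ INR K * / INR K))
     (csum (fun j => csum (fun j' => csum (fun x => Cmul (Cconj (Z j y x)) (Z j' y x)) D) K) K))).
  2:{ intros y _. rewrite csum_scal. f_equal. rewrite csum_swap. apply csum_ext; intros j _.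
      apply csum_swap. }
  rewrite csum_scal, csum_swap.
  rewrite (csum_ext _ (fun j => Cofreal (hs2 D A))).
  2:{ intros j Hj. rewrite csum_swap.
      rewrite (csum_ext _ (fun j' => Cmul (deltaC j j') (Cofreal (hs2 D A))))
        by (intros j' Hj'; apply translates_gram; auto).
      apply csum_delta_l; auto. }
  rewrite csum_ofreal, rsum_const. apply Cpx_eq; unfold hs2; simpl; field; lra.
Qed.

End LocalAverage.

Section DiagonalBound.
Variable d n : nat.
Hypothesis Hd : d <> 0%nat.
Hypothesis Hn : n <> 0%nat.
Let D := (d ^ n)%nat.
Variable b : nat -> vec.
Hypothesis Hon : forall j k, (j < D)%nat -> (k < D)%nat ->
  cinner D (b j) (b k) = if Nat.eqb j k then C1 else C0.
Variable H : mat.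
Variable E : nat -> R.
Hypothesis Heig : forall j i, (j < D)%nat -> (i < D)%nat ->
        mvmul D H (b j) i = Cmul (Cofreal (E j)) (b j i).
Hypothesis Hcomm : mcommute D H (transl d n).
Hypothesis Hdist : forall c a, (c < D)%nat -> (a < D)%nat -> c <> a -> E c <> E a.

Lemma translate_avg_diag (A : mat) r K a : (1 <= K)%nat -> (a < D)%nat ->
  hat D b (translate_avg d n A r K) a a = hat D b A a a.
Proof.
  intros HK Ha. assert (HKR : 0 < INR K) by (apply lt_0_INR; lia).
  unfold translate_avg. rewrite hat_sum.
  rewrite (csum_ext _ (fun _ => Cmul (Cofreal (/ INR K)) (hat D b A a a))).
  2:{ intros j _. change (fun y x => Cmul (Cofreal (/ INR K)) (As d n A (j * r) y x))
        with (mscale (Cofreal (/ INR K)) (As d n A (j * r))).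
      rewrite hat_scale, (hat_As d n Hd Hn b Hon H E Heig Hcomm Hdist); auto. }
  rewrite (csum_ext _ (fun k => Cmul (Cofreal 1) (Cmul (Cofreal (/ INR K)) (hat D b A a a))))
    by (intros; ring_simplify; apply Cpx_eq; simpl; ring).
  rewrite csum_scal_r, csum_ofreal, rsum_const. apply Cpx_eq; simpl; field; lra.
Qed.

Lemma diag_sum_bound (A : mat) r M K :
  0 < M -> r_local d n r A -> traceless D A -> opnorm_le D A M ->
  (1 <= K)%nat -> (K = 1%nat \/ (K * r <= n)%nat) ->
  rsum (fun a => Cnorm2 (hat D b A a a)) D <= INR D * (M * M) / INR K.
Proof.
  intros HM [s0 [m [a [Hs0 [Hm HA]]]]] Htr Hop HK HKr.
  assert (HKR : 0 < INR K) by (apply lt_0_INR; lia).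
  rewrite (rsum_ext _ (fun a' => Cnorm2 (hat D b (translate_avg d n A r K) a' a')))
    by (intros; rewrite translate_avg_diag; auto).
  eapply Rle_trans; [apply diag_bound; auto|]. unfold D.
  rewrite (translate_avg_hs2 d n Hd Hn A s0 m a Hs0 HA Htr r K Hm HK HKr).
  unfold Rdiv. apply Rmult_le_compat_r; [left; apply Rinv_0_lt_compat; auto|].
  apply HS_bound; auto.
Qed.
End DiagonalBound.

(** Four-fold sums, indexed as in <b_a| A†(t) |b_e><b_e| B† |b_c><b_c| A(t) |b_b'><b_b'| B |b_a>. *)
Definition csum4 (F : nat -> nat -> nat -> nat -> Cpx) (N : nat) : Cpx :=
  csum (fun a => csum (fun e => csum (fun c => csum (fun b => F a e c b) N) N) N) N.
Definition rsum4 (F : nat -> nat -> nat -> nat -> R) (N : nat) : R :=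
  rsum (fun a => rsum (fun e => rsum (fun c => rsum (fun b => F a e c b) N) N) N) N.

Lemma Cmod_csum4 (F : nat -> nat -> nat -> nat -> Cpx) N :
  Cmod (csum4 F N) <= rsum4 (fun a e c b => Cmod (F a e c b)) N.
Proof.
  eapply Rle_trans. apply Cmod_csum. apply rsum_le; intros a _.
  eapply Rle_trans. apply Cmod_csum. apply rsum_le; intros e _.
  eapply Rle_trans. apply Cmod_csum. apply rsum_le; intros c _.
  apply Cmod_csum.
Qed.

Lemma rsum4_le F G N :
  (forall a e c b, (a < N)%nat -> (e < N)%nat -> (c < N)%nat -> (b < N)%nat -> F a e c b <= G a e c b) ->
  rsum4 F N <= rsum4 G N.
Proof.
  intros H. unfold rsum4. apply rsum_le; intros a Ha. apply rsum_le; intros e He.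
  apply rsum_le; intros c Hc. apply rsum_le; intros b Hb. auto.
Qed.

Lemma rsum4_add F G N : rsum4 (fun a e c b => F a e c b + G a e c b) N = rsum4 F N + rsum4 G N.
Proof.
  unfold rsum4. rewrite <- rsum_add. apply rsum_ext; intros a _.
  rewrite <- rsum_add. apply rsum_ext; intros e _.
  rewrite <- rsum_add. apply rsum_ext; intros c _.
  apply rsum_add.
Qed.

Lemma rsum4_pair_1 F N :
  rsum4 (fun a e c b => deltaR a b * deltaR c e * F a e c b) N = rsum (fun a => rsum (fun e => F a e e a) N) N.
Proof.
  unfold rsum4. apply rsum_ext; intros a Ha. apply rsum_ext; intros e He.
  rewrite (rsum_ext _ (fun c => deltaR c e * F a e c a)).
  - apply (rsum_delta_r e (fun c => F a e c a)); auto.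
  - intros c Hc. rewrite (rsum_ext _ (fun b => deltaR a b * (deltaR c e * F a e c b))) by (intros; ring).
    apply (rsum_delta_l a (fun b => deltaR c e * F a e c b)); auto.
Qed.
Lemma rsum4_pair_2 F N :
  rsum4 (fun a e c b => deltaR a e * deltaR b c * F a e c b) N = rsum (fun a => rsum (fun c => F a a c c) N) N.
Proof.
  unfold rsum4. apply rsum_ext; intros a Ha.
  rewrite (rsum_ext _ (fun e => deltaR a e * rsum (fun c => F a e c c) N)).
  - apply (rsum_delta_l a (fun e => rsum (fun c => F a e c c) N)); auto.
  - intros e He. rewrite <- rsum_scal. apply rsum_ext; intros c Hc.
    rewrite (rsum_ext _ (fun b => deltaR b c * (deltaR a e * F a e c b))) by (intros; ring).
    apply (rsum_delta_r c (fun b => deltaR a e * F a e c b)); auto.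
Qed.

Lemma avgcv_csum4 (F : nat -> nat -> nat -> nat -> R -> Cpx) (L : nat -> nat -> nat -> nat -> Cpx) N :
  (forall a e c b, (a < N)%nat -> (e < N)%nat -> (c < N)%nat -> (b < N)%nat ->
     TimeAverage.avgcv (F a e c b) (L a e c b)) ->
  TimeAverage.avgcv (fun t => csum4 (fun a e c b => F a e c b t) N) (csum4 L N).
Proof.
  intros H. unfold csum4.
  apply (TimeAverage.avgcv_csum (fun a t => csum (fun e => csum (fun c => csum (fun b => F a e c b t) N) N) N)); intros a Ha.
  apply (TimeAverage.avgcv_csum (fun e t => csum (fun c => csum (fun b => F a e c b t) N) N)); intros e He.
  apply (TimeAverage.avgcv_csum (fun c t => csum (fun b => F a e c b t) N)); intros c Hc.
  apply (TimeAverage.avgcv_csum (fun b t => F a e c b t)); intros b Hb.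
  auto.
Qed.

Section Integrand.
Variable D : nat.
Variable b : nat -> vec.
Hypothesis Hon : forall j k, (j < D)%nat -> (k < D)%nat ->
  cinner D (b j) (b k) = if Nat.eqb j k then C1 else C0.
Variable E : nat -> R.
Variables (U V : R -> mat).
Hypothesis HU : forall t c a, (c < D)%nat -> (a < D)%nat ->
  hat D b (U t) c a = Cmul (deltaC c a) (expi (t * E a)).
Hypothesis HV : forall t c a, (c < D)%nat -> (a < D)%nat ->
  hat D b (V t) c a = Cmul (deltaC c a) (expi (- t * E a)).

Lemma hat_heis A t c e : (c < D)%nat -> (e < D)%nat ->
  hat D b (heis D U V A t) c e = Cmul (Cmul (expi (t * E c)) (hat D b A c e)) (expi (- t * E e)).
Proof.
  intros Hc He. unfold heis. rewrite hat_mmul by auto.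
  rewrite (csum_ext _ (fun q => Cmul (deltaC q e) (Cmul (hat D b (mmul D (U t) A) c q) (expi (- t * E e)))))
    by (intros q Hq; rewrite HV by auto; ring).
  rewrite csum_delta_r, hat_mmul by auto.
  rewrite (csum_ext _ (fun p => Cmul (deltaC c p) (Cmul (expi (t * E c)) (hat D b A c e)))).
  2:{ intros p Hp. rewrite HU by auto. unfold deltaC. destruct (Nat.eqb_spec c p) as [<-|]; ring. }
  rewrite csum_delta_l by auto. auto.
Qed.

Definition ocoef (A B : mat) a e c b' : Cpx :=
  Cmul (Cofreal (/ INR D)) (Cmul (Cmul (Cmul (Cconj (hat D b A b' a)) (Cconj (hat D b B c b')))
     (hat D b A c e)) (hat D b B e a)).
Definition ofreq a e c b' : R := E a - E b' + E c - E e.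

Lemma integrand_formula A B t :
  otoc_integrand D U V A B t =
  csum4 (fun a e c b' => Cmul (ocoef A B a e c b') (expi (ofreq a e c b' * t))) D.
Proof.
  unfold otoc_integrand, expect, csum4. rewrite (trace_hat D b Hon). rewrite Crscale_mul, <- csum_scal.
  apply csum_ext; intros a Ha.
  rewrite hat_mmul by auto. rewrite <- csum_scal. apply csum_ext; intros e He.
  rewrite hat_mmul by auto. rewrite <- csum_scal_r, <- csum_scal. apply csum_ext; intros c Hc.
  rewrite hat_mmul by auto. rewrite <- csum_scal_r, <- csum_scal_r, <- csum_scal. apply csum_ext; intros b' Hb.
  rewrite !hat_adj, !hat_heis, !Cconj_mul, !expi_conj by auto.
  unfold ocoef, ofreq.
  set (X1 := hat D b A b' a). set (X2 := hat D b B c b'). set (X3 := hat D b A c e). set (X4 := hat D b B e a).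
  transitivity (Cmul (Cmul (Cofreal (/ INR D)) (Cmul (Cmul (Cmul (Cconj X1) (Cconj X2)) X3) X4))
     (Cmul (Cmul (Cmul (expi (- (t * E b'))) (expi (- (- t * E a)))) (expi (t * E c))) (expi (- t * E e)))).
  - ring.
  - rewrite !expi_add. f_equal. f_equal. ring.
Qed.

Definition resonant_sum (A B : mat) : Cpx :=
  csum4 (fun a e c b' => if Req_EM_T (ofreq a e c b') 0 then ocoef A B a e c b' else C0) D.

Lemma otoc_time_average A B : time_avg_cv (otoc_integrand D U V A B) (resonant_sum A B).
Proof.
  apply TimeAverage.avgcv_time.
  apply TimeAverage.avgcv_ext with
    (fun t => csum4 (fun a e c b' => Cmul (ocoef A B a e c b') (expi (ofreq a e c b' * t))) D).
  { intros t. symmetry. apply integrand_formula. }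
  apply avgcv_csum4. intros. apply TimeAverage.avgcv_term.
Qed.
End Integrand.

(** ** Bounding the resonant sum *)

(** Schur test: a kernel whose row and column sums are at most S defines a
    quadratic form bounded by S, via x_a x_e ≤ (x_a² + x_e²)/2. *)
Lemma schur_test (x : nat -> R) (K : nat -> nat -> R) N S :
  (forall a, (a < N)%nat -> 0 <= x a) ->
  (forall e a, (e < N)%nat -> (a < N)%nat -> 0 <= K e a) ->
  (forall a, (a < N)%nat -> rsum (fun e => K e a) N <= S) ->
  (forall e, (e < N)%nat -> rsum (fun a => K e a) N <= S) ->
  rsum (fun a => rsum (fun e => x a * x e * K e a) N) N <= S * rsum (fun a => x a * x a) N.
Proof.
  intros Hx HK Hc Hr.
  apply Rle_trans with (rsum (fun a => rsum (fun e =>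
    (/2 * (x a * x a)) * K e a + (/2 * (x e * x e)) * K e a) N) N).
  { apply rsum_le; intros a Ha; apply rsum_le; intros e He.
    assert (0 <= K e a) by auto.
    assert (x a * x e <= /2 * (x a * x a) + /2 * (x e * x e)).
    { assert (0 <= (x a - x e) * (x a - x e)) by apply Rle_0_sqr. nra. }
    nra. }
  rewrite (rsum_ext _ (fun a => rsum (fun e => /2 * (x a * x a) * K e a) N
                              + rsum (fun e => /2 * (x e * x e) * K e a) N))
    by (intros; apply rsum_add).
  rewrite rsum_add, (rsum_swap (fun a e => /2 * (x e * x e) * K e a)).
  rewrite (rsum_ext (fun a => rsum (fun e => /2 * (x a * x a) * K e a) N)
                    (fun a => /2 * (x a * x a) * rsum (fun e => K e a) N)) by (intros; apply rsum_scal).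
  rewrite (rsum_ext (fun e => rsum (fun a => /2 * (x e * x e) * K e a) N)
                    (fun e => /2 * (x e * x e) * rsum (fun a => K e a) N)) by (intros; apply rsum_scal).
  apply Rle_trans with (rsum (fun a => /2 * (x a * x a) * S) N + rsum (fun a => /2 * (x a * x a) * S) N).
  { apply Rplus_le_compat; apply rsum_le; intros a Ha; apply Rmult_le_compat_l; auto;
    assert (0 <= x a) by auto; nra. }
  rewrite <- rsum_add, <- rsum_scal. right. apply rsum_ext; intros. field.
Qed.

Lemma nondeg_gaps_simple D E : nondeg_gaps D E ->
  forall c a, (c < D)%nat -> (a < D)%nat -> c <> a -> E c <> E a.
Proof.
  intros Hgap c a Hc Ha Hne Heq. destruct (Hgap c a a c Hc Ha Ha Hc Hne) as [h _]; [lra|auto].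
Qed.

Lemma resonance D E a e c b' : nondeg_gaps D E ->
  (a < D)%nat -> (e < D)%nat -> (c < D)%nat -> (b' < D)%nat ->
  ofreq E a e c b' = 0 -> (a = b' /\ c = e) \/ (a = e /\ b' = c).
Proof.
  intros Hgap Ha He Hc Hb Hf. unfold ofreq in Hf.
  destruct (Nat.eq_dec a b') as [<-|Hne].
  - left. split; auto. destruct (Nat.eq_dec c e) as [|Hce]; auto.
    exfalso. apply (nondeg_gaps_simple D E Hgap c e Hc He Hce). lra.
  - right. apply (Hgap a b' e c); auto. lra.
Qed.

Section ResonantBound.
Variable D : nat.
Variable b : nat -> vec.
Hypothesis Hon : forall j k, (j < D)%nat -> (k < D)%nat ->
  cinner D (b j) (b k) = if Nat.eqb j k then C1 else C0.
Variable E : nat -> R.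
Hypothesis Hgap : nondeg_gaps D E.
Variables (A B : mat) (M : R).
Hypothesis HM : 0 < M.
Hypothesis HopA : opnorm_le D A M.
Hypothesis HopB : opnorm_le D B M.
Hypothesis HD : 0 < INR D.

Let Wm a e c b' : R := / INR D *
  (Cmod (hat D b A b' a) * Cmod (hat D b B c b') * Cmod (hat D b A c e) * Cmod (hat D b B e a)).

Lemma Wm_nonneg a e c b' : 0 <= Wm a e c b'.
Proof.
  unfold Wm. apply Rmult_le_pos; [left; apply Rinv_0_lt_compat; auto|].
  repeat apply Rmult_le_pos; apply Cmod_nonneg.
Qed.

Lemma resonant_sum_pairings :
  Cmod (resonant_sum D b E A B) <=
  rsum (fun a => rsum (fun e => Wm a e e a) D) D + rsum (fun a => rsum (fun c => Wm a a c c) D) D.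
Proof.
  rewrite <- rsum4_pair_1, <- rsum4_pair_2, <- rsum4_add.
  eapply Rle_trans; [apply Cmod_csum4|]. apply rsum4_le. intros a e c b' Ha He Hc Hb.
  assert (P1 := deltaR_nonneg a b'). assert (P2 := deltaR_nonneg c e).
  assert (P3 := deltaR_nonneg a e). assert (P4 := deltaR_nonneg b' c).
  assert (P5 := Wm_nonneg a e c b').
  assert (Q1 : 0 <= deltaR a b' * deltaR c e * Wm a e c b') by (apply Rmult_le_pos; [apply Rmult_le_pos|]; auto).
  assert (Q2 : 0 <= deltaR a e * deltaR b' c * Wm a e c b') by (apply Rmult_le_pos; [apply Rmult_le_pos|]; auto).
  destruct (Req_EM_T (ofreq E a e c b') 0) as [Hz|Hz]; [|rewrite Cmod_0; lra].
  replace (Cmod (ocoef D b A B a e c b')) with (Wm a e c b').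
  2:{ unfold ocoef, Wm. rewrite !Cmod_mul, !Cmod_conj, Cmod_ofreal, Rabs_right; [ring|].
      left; apply Rinv_0_lt_compat; auto. }
  destruct (resonance D E a e c b' Hgap Ha He Hc Hb Hz) as [[<- <-]|[<- <-]];
    rewrite !deltaR_refl in *; lra.
Qed.

(** Combining with the Schur test for the kernels |B_ea|² and |A_ca|². *)
Lemma resonant_sum_bound :
  Cmod (resonant_sum D b E A B) <=
  / INR D * (M * M * rsum (fun a => Cnorm2 (hat D b A a a)) D
           + M * M * rsum (fun a => Cnorm2 (hat D b B a a)) D).
Proof.
  eapply Rle_trans; [apply resonant_sum_pairings|].
  set (x := fun a => Cmod (hat D b A a a)). set (y := fun a => Cmod (hat D b B a a)).
  rewrite (rsum_ext _ (fun a => / INR D * rsum (fun e => x a * x e * Cnorm2 (hat D b B e a)) D)).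
  2:{ intros a Ha. rewrite <- rsum_scal. apply rsum_ext; intros e He. unfold Wm, x.
      rewrite <- Cmod_sqr. ring. }
  rewrite (rsum_ext (fun a => rsum (fun c => Wm a a c c) D)
     (fun a => / INR D * rsum (fun c => y a * y c * Cnorm2 (hat D b A c a)) D)).
  2:{ intros a Ha. rewrite <- rsum_scal. apply rsum_ext; intros c Hc. unfold Wm, y.
      rewrite <- Cmod_sqr. ring. }
  rewrite !rsum_scal, <- Rmult_plus_distr_l.
  apply Rmult_le_compat_l; [left; apply Rinv_0_lt_compat; auto|].
  rewrite (rsum_ext (fun a => Cnorm2 (hat D b A a a)) (fun a => x a * x a))
    by (intros; unfold x; symmetry; apply Cmod_sqr).
  rewrite (rsum_ext (fun a => Cnorm2 (hat D b B a a)) (fun a => y a * y a))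
    by (intros; unfold y; symmetry; apply Cmod_sqr).
  apply Rplus_le_compat; apply schur_test.
  - intros; apply Cmod_nonneg.
  - intros; apply Cnorm2_nonneg.
  - intros a Ha. apply (colsum D b Hon B M a HM HopB Ha).
  - intros e He. apply (rowsum D b Hon B M e HM HopB He).
  - intros; apply Cmod_nonneg.
  - intros; apply Cnorm2_nonneg.
  - intros a Ha. apply (colsum D b Hon A M a HM HopA Ha).
  - intros c Hc. apply (rowsum D b Hon A M c HM HopA Hc).
Qed.
End ResonantBound.

Lemma block_count (n r : nat) : (1 <= r)%nat -> n <> 0%nat ->
  exists K, (1 <= K)%nat /\ (K = 1%nat \/ (K * r <= n)%nat) /\ (n <= 2 * r * K)%nat.
Proof.
  intros Hr Hn. destruct (lt_dec n r) as [Hlt|Hge].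
  - exists 1%nat. repeat split; auto. lia.
  - exists (n / r)%nat.
    assert (H1 : (1 <= n / r)%nat) by (apply Nat.div_str_pos; lia).
    assert (H2 : (r * (n / r) <= n)%nat) by apply Nat.Div0.mul_div_le.
    assert (H3 := Nat.div_mod_eq n r). assert (H4 : (n mod r < r)%nat) by (apply Nat.mod_upper_bound; lia).
    repeat split; auto. right. lia. nia.
Qed.

Lemma final_estimate (D n r K : nat) (M XA XB : R) :
  0 < M -> (0 < INR D) -> (1 <= K)%nat -> n <> 0%nat -> (n <= 2 * r * K)%nat ->
  XA <= INR D * (M * M) / INR K -> XB <= INR D * (M * M) / INR K ->
  / INR D * (M * M * XA + M * M * XB) <= 4 * INR r * (M * M * (M * M)) / INR n.
Proof.
  intros HM HD HK Hn HnK HA HB.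
  assert (HKR : 0 < INR K) by (apply lt_0_INR; lia).
  assert (HnR : 0 < INR n) by (apply lt_0_INR; lia).
  assert (HnK' : INR n <= 2 * INR r * INR K).
  { replace 2 with (INR 2) by (simpl; ring). rewrite <- !mult_INR. apply le_INR. auto. }
  assert (HM2 : 0 < M * M) by nra.
  apply Rle_trans with (/ INR D * (M * M * (INR D * (M * M) / INR K) + M * M * (INR D * (M * M) / INR K))).
  { apply Rmult_le_compat_l; [left; apply Rinv_0_lt_compat; auto|].
    apply Rplus_le_compat; apply Rmult_le_compat_l; lra. }
  replace (/ INR D * (M * M * (INR D * (M * M) / INR K) + M * M * (INR D * (M * M) / INR K)))
    with (2 * (M * M * (M * M)) * INR n / (INR K * INR n)) by (field; lra).
  replace (4 * INR r * (M * M * (M * M)) / INR n)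
    with (4 * INR r * (M * M * (M * M)) * INR K / (INR K * INR n)) by (field; lra).
  unfold Rdiv. apply Rmult_le_compat_r; [left; apply Rinv_0_lt_compat; nra|].
  assert (0 < M * M * (M * M)) by nra. nra.
Qed.

Theorem theorem2 (d r : nat) (M : R) :
  (2 <= d)%nat -> (1 <= r)%nat -> 0 < M ->
  exists Cst : R, 0 < Cst /\
  forall (n : nat) (H A B : mat) (E : nat -> R) (U V : R -> mat),
    hermitian (Nat.pow d n) H ->
    mcommute (Nat.pow d n) H (transl d n) ->
    spectrum_of (Nat.pow d n) H E ->
    nondeg_gaps (Nat.pow d n) E ->
    traceless (Nat.pow d n) A -> traceless (Nat.pow d n) B ->
    r_local d n r A -> r_local d n r B ->
    opnorm_le (Nat.pow d n) A M -> opnorm_le (Nat.pow d n) B M ->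
    (forall t, is_mexp (Nat.pow d n) (mscale (mkCpx 0 t) H) (U t)) ->
    (forall t, is_mexp (Nat.pow d n) (mscale (mkCpx 0 (- t)) H) (V t)) ->
    exists L : Cpx,
      time_avg_cv (otoc_integrand (Nat.pow d n) U V A B) L /\
      Cmod L <= Cst / INR n.
Proof.
  intros Hd2 Hr HM.
  exists (4 * INR r * (M * M * (M * M))). split.
  { assert (0 < INR r) by (apply lt_0_INR; lia). repeat apply Rmult_lt_0_compat; lra. }
  intros n H A B E U V _ Hcomm [bs [Hon Heig]] Hgap HtrA HtrB HlocA HlocB HopA HopB HU HV.
  assert (Hn : n <> 0%nat) by (destruct HlocA as [s [m [a [Hs _]]]]; lia).
  assert (Hd : d <> 0%nat) by lia.
  assert (HD : 0 < INR (Nat.pow d n)) by (apply lt_0_INR, Nat.neq_0_lt_0, Nat.pow_nonzero; auto).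
  assert (Hdist := nondeg_gaps_simple _ E Hgap).
  exists (resonant_sum (Nat.pow d n) bs E A B). split.
  - apply otoc_time_average; auto.
    + intros t. exact (hat_exp_iH _ bs Hon H E Heig t (U t) (HU t)).
    + intros t. exact (hat_exp_iH _ bs Hon H E Heig (- t) (V t) (HV t)).
  - destruct (block_count n r Hr Hn) as [K [HK [HKr HnK]]].
    eapply Rle_trans; [apply (resonant_sum_bound _ bs Hon E Hgap A B M); auto|].
    apply (final_estimate (Nat.pow d n) n r K); auto.
    + apply (diag_sum_bound d n Hd Hn bs Hon H E Heig Hcomm Hdist A r); auto.
    + apply (diag_sum_bound d n Hd Hn bs Hon H E Heig Hcomm Hdist B r); auto.
Qed.
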